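(* Let $A>0$, $b>0$ and $\rho\in(\frac14,\frac12)$. Then, as $h\to0_+$, \[ \inf_{\substack{m\in\mathbb Z\\|m|\le A}}\lambda_1\bigl(\mathcal H^{b,\rho}_{m,h}\bigr)=-1-h^{1/2}+\Bigl(\hat\beta(b,A)-\frac12\Bigr)h+o(h), \qquad\hat\beta(b,A)=\inf_{\substack{m\in\mathbb Z\\|m|\le A}}\Bigl(m-\frac b2\Bigr)^2. \]
   Context: Let $h\in(0,1)$ with $h^{\frac12-\rho}<\frac13$ and $\delta=h^{\rho-\frac12}$. For $m\in\mathbb Z$, $\mathcal H^{b,\rho}_{m,h}$ is the self-adjoint operator in the weighted space $L^2((0,\delta);(1-h^{1/2}\tau)d\tau)$ associated with the quadratic form \[ v\mapsto\int_0^\delta\Bigl(|v'(\tau)|^2+\frac{h}{(1-h^{1/2}\tau)^2}\Bigl(m-\frac b2(1-h^{1/2}\tau)^2\Bigr)^2|v(\tau)|^2\Bigr)(1-h^{1/2}\tau)\,d\tau-|v(0)|^2 \] on $\{v\in H^1((0,\delta)):v(\delta)=0\}$ (boundary conditions $v'(0)=-v(0)$, $v(\delta)=0$). $\lambda_1(\cdot)$ denotes the lowest eigenvalue. *)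

From Stdlib Require Import Reals Lra ZArith.
Open Scope R_scope.

Definition wgt (h tau : R) : R := 1 - sqrt h * tau.

Definition delta (rho h : R) : R := Rpower h (rho - 1/2).

Definition pot (b : R) (m : Z) (h tau : R) : R :=
  h / (wgt h tau)^2 * (IZR m - b/2 * (wgt h tau)^2)^2.

(* lam is an eigenvalue of H^{b,rho}_{m,h}: the operator associated with the
   quadratic form acts as  v |-> -(1/w) (w v')' + pot v  on the weighted space
   L^2((0,delta); w dtau), with boundary conditions v'(0) = -v(0), v(delta)=0.
   An eigenfunction is a (real-valued) function v, with derivative dv, such
   that w*dv is differentiable (derivative g), solving the eigen-equation on
   [0,delta], satisfying the boundary conditions and not identically zero on
   [0,delta]. *)
Definition is_eigenvalue (b rho : R) (m : Z) (h lam : R) : Prop :=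
  exists v dv g : R -> R,
    (forall t, derivable_pt_lim v t (dv t)) /\
    (forall t, derivable_pt_lim (fun s => wgt h s * dv s) t (g t)) /\
    (forall t, 0 <= t <= delta rho h ->
        - g t / wgt h t + pot b m h t * v t = lam * v t) /\
    dv 0 = - v 0 /\
    v (delta rho h) = 0 /\
    (exists t, 0 <= t <= delta rho h /\ v t <> 0).

Definition is_lowest_eigenvalue (b rho : R) (m : Z) (h lam : R) : Prop :=
  is_eigenvalue b rho m h lam /\
  (forall mu, is_eigenvalue b rho m h mu -> lam <= mu).

(* beta = hat beta(b,A) = inf_{m in Z, |m| <= A} (m - b/2)^2
   (a minimum over a finite nonempty set when A >= 0). *)
Definition is_beta_hat (b A beta : R) : Prop :=
  (exists m : Z, Rabs (IZR m) <= A /\ beta = (IZR m - b/2)^2) /\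
  (forall m : Z, Rabs (IZR m) <= A -> beta <= (IZR m - b/2)^2).

From Stdlib Require Import Reals Lra Lia Psatz Factorial Classical.
From Coquelicot Require Import Coquelicot.
Open Scope R_scope.

(* The eigenvalue problem is solved by shooting: the Robin initial-value problem is solved
   for every [lam] (Picard iteration for the first-order system in [v] and [w v']), and [lam]
   is an eigenvalue when the solution vanishes at [delta]. The infimum of the [lam] whose solution
   takes a nonpositive value on [[0, delta]] is attained by continuity in [lam]; since a solution and
   its flux never vanish together, its solution vanishes exactly at [delta], and Sturm comparison
   shows that no eigenvalue lies below it. Explicit comparison functions close to the half-line
   ground state [exp (-t)] bound it from below by [-1 - h^(1/2) + (beta - 1/2 - sigma) h] and from
   above by [-1 - h^(1/2) + ((m - b/2)^2 - 1/2 + sigma) h]: on [[0, delta]] the potential is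
   [h (m - b/2)^2] up to [O(h^(3/2) delta)], and [h^(1/2) delta^2], [h delta^2], [exp (- delta) / h]
   all tend to 0 as [h -> 0] because [1/4 < rho < 1/2]. *)

Lemma exp_le_compat x y : x <= y -> exp x <= exp y.
Proof. intros [H|H]; [left; now apply exp_increasing|subst; lra]. Qed.

Lemma is_derive_const_R (k x : R) : is_derive (fun _ => k) x 0.
Proof. exact (is_derive_const k x). Qed.

Lemma is_derive_plus_R (f g : R -> R) x df dg :
  is_derive f x df -> is_derive g x dg -> is_derive (fun y => f y + g y) x (df + dg).
Proof. intros Hf Hg. exact (is_derive_plus _ _ _ _ _ Hf Hg). Qed.

Lemma is_derive_minus_R (f g : R -> R) x df dg :
  is_derive f x df -> is_derive g x dg -> is_derive (fun y => f y - g y) x (df - dg).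
Proof. intros Hf Hg. exact (is_derive_minus _ _ _ _ _ Hf Hg). Qed.

Lemma is_derive_opp_R (f : R -> R) x df :
  is_derive f x df -> is_derive (fun y => - f y) x (- df).
Proof. intros Hf. exact (is_derive_opp _ _ _ Hf). Qed.

Lemma is_derive_mult_R (f g : R -> R) x df dg :
  is_derive f x df -> is_derive g x dg ->
  is_derive (fun y => f y * g y) x (df * g x + f x * dg).
Proof. intros Hf Hg. exact (is_derive_mult _ _ _ _ _ Hf Hg Rmult_comm). Qed.

Lemma is_derive_sqr_R (f : R -> R) x df :
  is_derive f x df -> is_derive (fun y => f y ^ 2) x (2 * f x * df).
Proof.
  intros Hf. apply (is_derive_ext (fun y => f y * f y)); [intros; simpl; ring|].
  replace (2 * f x * df) with (df * f x + f x * df) by ring.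
  now apply is_derive_mult_R.
Qed.

Lemma is_derive_exp_comp (g : R -> R) x dg :
  is_derive g x dg -> is_derive (fun y => exp (g y)) x (dg * exp (g x)).
Proof.
  intros Hg. apply (is_derive_comp exp g x (exp (g x)) dg); [|exact Hg].
  apply is_derive_Reals, derivable_pt_lim_exp.
Qed.

Lemma is_derive_mult_exp (p g : R -> R) x dp dg l :
  is_derive p x dp -> is_derive g x dg -> l = (dp + p x * dg) * exp (g x) ->
  is_derive (fun y => p y * exp (g y)) x l.
Proof.
  intros Hp Hg ->.
  replace ((dp + p x * dg) * exp (g x)) with (dp * exp (g x) + p x * (dg * exp (g x))) by ring.
  apply (is_derive_mult_R p (fun y => exp (g y))); [auto|now apply is_derive_exp_comp].
Qed.

Lemma continuous_mult_R (f g : R -> R) x : continuous f x -> continuous g x ->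
  continuous (fun y => f y * g y) x.
Proof. intros Hf Hg. exact (continuous_mult f g x Hf Hg). Qed.

Lemma continuous_of_is_derive (f : R -> R) x df : is_derive f x df -> continuous f x.
Proof. intros Hf. apply (@ex_derive_continuous R_AbsRing R_NormedModule). now exists df. Qed.

Lemma continuity_pt_of_is_derive (f : R -> R) x df : is_derive f x df -> continuity_pt f x.
Proof. intros Hf. apply continuity_pt_filterlim. now apply (continuous_of_is_derive f x df). Qed.

Lemma continuous_lipschitz (f : R -> R) (L : R) x : 0 < L ->
  (forall y z, Rabs (f y - f z) <= L * Rabs (y - z)) -> continuous f x.
Proof.
  intros HL Hf. apply filterlim_locally. intros eps.
  assert (He : 0 < eps / L) by (apply Rdiv_lt_0_compat; [apply cond_pos|auto]).
  exists (mkposreal _ He). intros y Hy. change (Rabs (f y - f x) < eps).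
  change (Rabs (y - x) < eps / L) in Hy.
  eapply Rle_lt_trans; [apply Hf|].
  replace (pos eps) with (L * (eps / L)) by (field; lra).
  apply Rmult_lt_compat_l; auto.
Qed.

Lemma Rmin_lipschitz k x y : Rabs (Rmin x k - Rmin y k) <= 1 * Rabs (x - y).
Proof. unfold Rmin; destruct (Rle_dec x k), (Rle_dec y k); split_Rabs; lra. Qed.

Lemma nondecreasing_of_derive_nonneg (F dF : R -> R) x y : x <= y ->
  (forall s, x <= s <= y -> is_derive F s (dF s)) ->
  (forall s, x <= s <= y -> 0 <= dF s) -> F x <= F y.
Proof.
  intros Hxy HD Hpos.
  destruct (Req_dec x y) as [<-|Hne]; [lra|].
  destruct (MVT_cor2 F dF x y) as [c [Hc1 Hc2]]; [lra| |].
  - intros c Hc. apply is_derive_Reals, HD. lra.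
  - assert (0 <= dF c) by (apply Hpos; lra). nra.
Qed.

Lemma Rabs_le_of_derive_le (D dD G dG : R -> R) t : 0 <= t -> D 0 = 0 -> G 0 = 0 ->
  (forall s, 0 <= s <= t -> is_derive D s (dD s)) ->
  (forall s, 0 <= s <= t -> is_derive G s (dG s)) ->
  (forall s, 0 <= s <= t -> Rabs (dD s) <= dG s) -> Rabs (D t) <= G t.
Proof.
  intros Ht D0 G0 HD HG Hb.
  assert (Hm : G 0 - D 0 <= G t - D t).
  { apply (nondecreasing_of_derive_nonneg (fun s => G s - D s) (fun s => dG s - dD s)); [lra| |].
    - intros s Hs. apply is_derive_minus_R; auto.
    - intros s Hs. specialize (Hb s Hs). apply Rabs_le_between in Hb. lra. }
  assert (Hp : G 0 + D 0 <= G t + D t).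
  { apply (nondecreasing_of_derive_nonneg (fun s => G s + D s) (fun s => dG s + dD s)); [lra| |].
    - intros s Hs. apply is_derive_plus_R; auto.
    - intros s Hs. specialize (Hb s Hs). apply Rabs_le_between in Hb. lra. }
  apply Rabs_le. lra.
Qed.

Lemma is_derive_pow_div_fact (K : R) (n : nat) s :
  is_derive (fun s => (K * s) ^ S n / INR (fact (S n))) s (K * (K * s) ^ n / INR (fact n)).
Proof.
  assert (Hf : 0 < INR (fact n)) by apply INR_fact_lt_0.
  auto_derive; [auto|].
  replace (INR (fact n + n * fact n)) with (INR (S n) * INR (fact n))
    by (rewrite <- mult_INR; reflexivity).
  change (match n with 0%nat => 1 | S _ => INR n + 1 end) with (INR (S n)).
  field. split; [lra|]. apply not_0_INR. lia.
Qed.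

Lemma Rabs_le_pow_div_fact (D dD : R -> R) (K : R) (n : nat) : 0 <= K -> D 0 = 0 ->
  (forall s, is_derive D s (dD s)) ->
  (forall s, Rabs (dD s) <= K * (K * Rabs s) ^ n / INR (fact n)) ->
  forall t, Rabs (D t) <= (K * Rabs t) ^ S n / INR (fact (S n)).
Proof.
  intros HK D0 HD Hb.
  assert (Hfwd : forall (E dE : R -> R), E 0 = 0 -> (forall s, is_derive E s (dE s)) ->
            (forall s, 0 <= s -> Rabs (dE s) <= K * (K * s) ^ n / INR (fact n)) ->
            forall t, 0 <= t -> Rabs (E t) <= (K * t) ^ S n / INR (fact (S n))).
  { intros E dE E0 HE HEb t Ht.
    apply (Rabs_le_of_derive_le E dE (fun s => (K * s) ^ S n / INR (fact (S n)))
             (fun s => K * (K * s) ^ n / INR (fact n))); auto.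
    - rewrite Rmult_0_r, pow_i by lia. unfold Rdiv; ring.
    - intros s _. apply is_derive_pow_div_fact.
    - intros s Hs. apply HEb. lra. }
  intros t. destruct (Rle_or_lt 0 t) as [Ht|Ht].
  - rewrite (Rabs_right t) by lra. apply (Hfwd D dD); auto.
    intros s Hs. rewrite <- (Rabs_right s) at 2 by lra. apply Hb.
  - rewrite (Rabs_left t) by lra. rewrite <- (Ropp_involutive t) at 1.
    apply (Hfwd (fun s => D (- s)) (fun s => - dD (- s))); [rewrite Ropp_0; auto| | |lra].
    + intros s. apply (is_derive_ext (fun s => D (- s))); [reflexivity|].
      replace (- dD (- s)) with (-1 * dD (- s)) by ring.
      apply (is_derive_comp D (fun s => - s)); [apply HD|].
      auto_derive; auto.
    + intros s Hs. rewrite Rabs_Ropp.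
      specialize (Hb (- s)). rewrite Rabs_Ropp, (Rabs_right s) in Hb by lra. exact Hb.
Qed.

Lemma pow_div_fact_le_exp x k : 0 <= x -> x ^ k / INR (fact k) <= exp x.
Proof.
  intros Hx. eapply Rle_trans; [|apply (exp_ge_taylor x k Hx)].
  assert (Hnn : forall j, 0 <= x ^ j / INR (fact j)).
  { intros j. apply Rle_mult_inv_pos; [now apply pow_le|apply INR_fact_lt_0]. }
  destruct k as [|k]; [simpl; lra|].
  rewrite tech5.
  assert (0 <= sum_f_R0 (fun j => x ^ j / INR (fact j)) k) by (apply cond_pos_sum; auto).
  lra.
Qed.

Lemma pow_div_fact_le_geometric K T x k : 0 <= K -> Rabs x <= T ->
  (K * Rabs x) ^ k / INR (fact k) <= exp (2 * K * T) * (/ 2) ^ k.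
Proof.
  intros HK Hx.
  assert (Hf : 0 < / INR (fact k)) by (apply Rinv_0_lt_compat, INR_fact_lt_0).
  assert (HT : 0 <= T) by (pose proof (Rabs_pos x); lra).
  assert (H1 : (K * Rabs x) ^ k <= (K * T) ^ k).
  { apply pow_incr. split; [apply Rmult_le_pos; auto; apply Rabs_pos|].
    now apply Rmult_le_compat_l. }
  assert (H2 : (K * T) ^ k = (2 * K * T) ^ k * (/ 2) ^ k)
    by (rewrite <- Rpow_mult_distr; f_equal; field).
  assert (H3 : (2 * K * T) ^ k / INR (fact k) <= exp (2 * K * T))
    by (apply pow_div_fact_le_exp; nra).
  assert (Hp : 0 <= (/ 2) ^ k) by (apply pow_le; lra).
  unfold Rdiv in *. apply Rle_trans with ((K * T) ^ k * / INR (fact k)); [nra|].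
  rewrite H2. nra.
Qed.

Lemma geometric_eventually_lt M eps : 0 <= M -> 0 < eps ->
  exists N, forall n, (N <= n)%nat -> M * (/ 2) ^ n < eps.
Proof.
  intros HM He.
  destruct (pow_lt_1_zero (/ 2)) with (y := eps / (M + 1)) as [N HN];
    [rewrite Rabs_right; lra|apply Rdiv_lt_0_compat; lra|].
  exists N. intros n Hn. specialize (HN n Hn).
  rewrite Rabs_right in HN by (apply Rle_ge, pow_le; lra).
  assert (Hp : 0 <= (/ 2) ^ n) by (apply pow_le; lra).
  apply Rle_lt_trans with ((M + 1) * (/ 2) ^ n); [nra|].
  apply Rmult_lt_reg_l with (/ (M + 1)); [apply Rinv_0_lt_compat; lra|].
  rewrite <- Rmult_assoc, Rinv_l by lra. unfold Rdiv in HN. lra.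
Qed.

Lemma is_lim_seq_geometric_bound (u : nat -> R) l C :
  (forall n, Rabs (u n - l) <= C * (/ 2) ^ n) -> is_lim_seq u l.
Proof.
  intros Hu. apply is_lim_seq_spec. intros eps.
  assert (HC : 0 <= C) by (specialize (Hu 0%nat); simpl in Hu; pose proof (Rabs_pos (u 0%nat - l)); lra).
  destruct (geometric_eventually_lt C eps HC (cond_pos eps)) as [N HN].
  exists N. intros n Hn. eapply Rle_lt_trans; [apply Hu|]. now apply HN.
Qed.

Lemma geometric_increments_limit (u : nat -> R) C : 0 <= C ->
  (forall n, Rabs (u (S n) - u n) <= C * (/ 2) ^ n) ->
  exists l, Lim_seq u = Finite l /\ forall n, Rabs (u n - l) <= 2 * C * (/ 2) ^ n.
Proof.
  intros HC Hu.
  assert (Htail : forall n k, Rabs (u (n + k)%nat - u n) <= 2 * C * (/ 2) ^ n - 2 * C * (/ 2) ^ (n + k)).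
  { intros n k. induction k as [|k IH].
    - rewrite Nat.add_0_r, Rminus_diag, Rabs_R0. lra.
    - replace (u (n + S k)%nat - u n) with ((u (S (n + k)) - u (n + k)%nat) + (u (n + k)%nat - u n))
        by (rewrite Nat.add_succ_r; ring).
      eapply Rle_trans; [apply Rabs_triang|].
      specialize (Hu (n + k)%nat). rewrite Nat.add_succ_r. simpl pow at 2. lra. }
  assert (Hcauchy : forall n m, (n <= m)%nat -> Rabs (u m - u n) <= 2 * C * (/ 2) ^ n).
  { intros n m Hnm. replace m with (n + (m - n))%nat by lia.
    specialize (Htail n (m - n)%nat).
    assert (0 <= (/ 2) ^ (n + (m - n))) by (apply pow_le; lra). nra. }
  assert (Hex : ex_finite_lim_seq u).
  { apply ex_lim_seq_cauchy_corr. intros eps.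
    destruct (geometric_eventually_lt (4 * C) eps) as [N HN]; [lra|apply cond_pos|].
    exists N. intros n m Hn Hm. specialize (HN N (le_n N)).
    pose proof (Hcauchy N n Hn). pose proof (Hcauchy N m Hm).
    replace (u n - u m) with ((u n - u N) - (u m - u N)) by ring.
    eapply Rle_lt_trans; [apply Rabs_triang|]. rewrite Rabs_Ropp. lra. }
  destruct Hex as [l Hl].
  exists l. split; [now apply is_lim_seq_unique|].
  intros n. apply Rabs_le.
  assert (Hev : eventually (fun m => u n - 2 * C * (/ 2) ^ n <= u m <= u n + 2 * C * (/ 2) ^ n)).
  { exists n. intros m Hm. specialize (Hcauchy n m Hm). apply Rabs_le_between in Hcauchy. lra. }
  split.
  - assert (Hle := is_lim_seq_le_loc _ _ _ _ (filter_imp _ _ (fun m H => proj2 H) Hev)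
                   Hl (is_lim_seq_const (u n + 2 * C * (/ 2) ^ n))). simpl in Hle. lra.
  - assert (Hle := is_lim_seq_le_loc _ _ _ _ (filter_imp _ _ (fun m H => proj1 H) Hev)
                   (is_lim_seq_const (u n - 2 * C * (/ 2) ^ n)) Hl). simpl in Hle. lra.
Qed.

Lemma is_derive_geometric_limit (f g : nat -> R -> R) (F G M : R -> R) :
  (forall n t, is_derive (f n) t (g n t)) -> (forall n t, continuous (g n) t) ->
  (forall T, 0 <= M T) ->
  (forall T x n, Rabs x <= T -> Rabs (f n x - F x) <= M T * (/ 2) ^ n) ->
  (forall T x n, Rabs x <= T -> Rabs (g n x - G x) <= M T * (/ 2) ^ n) ->
  forall x, is_derive F x (G x).
Proof.
  intros Hfd Hgc HM Hfu Hgu x.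
  assert (Hlim : forall (k : nat -> R -> R) K x,
            (forall T y n, Rabs y <= T -> Rabs (k n y - K y) <= M T * (/ 2) ^ n) ->
            Lim_seq (fun n => k n x) = Finite (K x)).
  { intros k K y Hk. apply is_lim_seq_unique, (is_lim_seq_geometric_bound _ _ (M (Rabs y))).
    intros n. now apply Hk. }
  set (T := Rabs x + 1).
  set (D := fun y => - T < y /\ y < T).
  assert (HDx : D x) by (unfold D, T; split; [pose proof (Rle_abs (- x)); rewrite Rabs_Ropp in *|
                                                 pose proof (Rle_abs x)]; lra).
  assert (HDT : forall y, D y -> Rabs y <= T) by (intros y [H1 H2]; apply Rabs_le; lra).
  assert (HDf : forall n y, Derive (f n) y = g n y) by (intros; apply is_derive_unique, Hfd).
  assert (Hcvu : forall (k : nat -> R -> R) K,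
            (forall T y n, Rabs y <= T -> Rabs (k n y - K y) <= M T * (/ 2) ^ n) ->
            CVU_dom k D).
  { intros k K Hk eps. destruct (geometric_eventually_lt (M T) eps (HM T) (cond_pos eps)) as [N HN].
    exists N. intros n Hn y Hy. rewrite (Hlim k K y Hk). simpl.
    eapply Rle_lt_trans; [apply (Hk T y n (HDT y Hy))|]. now apply HN. }
  assert (HC := CVU_Derive f D).
  assert (Hop : open D) by (apply open_and; [apply open_gt|apply open_lt]).
  assert (Hcon : is_connected D) by (intros a0 b0 y [Ha1 Ha2] [Hb1 Hb2] Hy; split; lra).
  specialize (HC Hop Hcon (Hcvu f F Hfu)).
  assert (Hex : forall n y, D y -> ex_derive (f n) y) by (intros n y _; eexists; apply Hfd).
  assert (Hcp : forall n y, D y -> continuity_pt (Derive (f n)) y).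
  { intros n y _. apply continuity_pt_filterlim.
    apply (continuous_ext (g n)); [intros z; symmetry; apply HDf|apply Hgc]. }
  assert (Hcvu' : CVU_dom (fun n y => Derive (f n) y) D).
  { intros eps. destruct (Hcvu g G Hgu eps) as [N HN]. exists N. intros n Hn y Hy.
    rewrite (Lim_seq_ext _ (fun n => g n y)) by (intros; apply HDf).
    rewrite HDf. now apply HN. }
  specialize (HC Hex Hcp Hcvu' x HDx).
  rewrite (Lim_seq_ext _ (fun n => g n x)), (Hlim g G x Hgu) in HC by (intros; apply HDf).
  apply (is_derive_ext (fun y => real (Lim_seq (fun n => f n y)))); [|exact HC].
  intros y. now rewrite (Hlim f F y Hfu).
Qed.

Lemma is_derive_RInt_0 (f : R -> R) : (forall x, continuous f x) ->
  forall t, is_derive (fun t => RInt f 0 t) t (f t).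
Proof.
  intros Hf t. apply (is_derive_RInt f (fun t => RInt f 0 t) 0 t); [|apply Hf].
  apply filter_forall. intros u. apply (@RInt_correct R_CompleteNormedModule).
  apply ex_RInt_continuous. intros z _. apply Hf.
Qed.

Lemma Rabs_mult_2xy_le k x y : Rabs (k * (2 * x * y)) <= Rabs k * (x ^ 2 + y ^ 2).
Proof.
  rewrite Rabs_mult. apply Rmult_le_compat_l; [apply Rabs_pos|].
  assert (0 <= (x - y) ^ 2) by apply pow2_ge_0. assert (0 <= (x + y) ^ 2) by apply pow2_ge_0.
  apply Rabs_le. simpl in *. split; nra.
Qed.

Lemma gronwall_le (E dE : R -> R) (K B T : R) : 0 < K -> 0 <= B -> 0 <= T -> E 0 = 0 ->
  (forall t, 0 <= t <= T -> is_derive E t (dE t)) ->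
  (forall t, 0 <= t <= T -> dE t <= K * E t + B) ->
  E T <= B / K * exp (K * T).
Proof.
  intros HK HB HT E0 HD Hb.
  set (F := fun t => - ((E t + B / K) * exp (- K * t))).
  assert (HF : F 0 <= F T).
  { apply (nondecreasing_of_derive_nonneg F
             (fun t => - (dE t * exp (- K * t) + (E t + B / K) * (- K * exp (- K * t))))); [lra| |].
    - intros s Hs. apply is_derive_opp_R.
      apply (is_derive_mult_R (fun t => E t + B / K) (fun t => exp (- K * t))).
      + replace (dE s) with (dE s + 0) by ring.
        apply is_derive_plus_R; [now apply HD|apply is_derive_const_R].
      + auto_derive; auto. ring.
    - intros s Hs. specialize (Hb s Hs). assert (0 < exp (- K * s)) by apply exp_pos.
      replace (- (dE s * exp (- K * s) + (E s + B / K) * (- K * exp (- K * s))))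
        with ((K * E s + B - dE s) * exp (- K * s)) by (field; lra).
      apply Rmult_le_pos; lra. }
  unfold F in HF. rewrite E0, Rmult_0_r, exp_0 in HF.
  assert (Hinv : exp (- K * T) * exp (K * T) = 1)
    by (rewrite <- exp_plus; replace (- K * T + K * T) with 0 by ring; apply exp_0).
  assert (Hp : 0 < exp (K * T)) by apply exp_pos.
  assert (Hmul : (E T + B / K) * exp (- K * T) * exp (K * T) <= (0 + B / K) * 1 * exp (K * T))
    by (apply Rmult_le_compat_r; lra).
  rewrite Rmult_assoc, Hinv in Hmul.
  assert (0 <= B / K * exp (K * T)) by (apply Rmult_le_pos; [apply Rdiv_le_0_compat|]; lra).
  nra.
Qed.

Section LinearSystem.

Variables a c : R -> R.

Fixpoint picard (n : nat) : (R -> R) * (R -> R) :=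
  match n with
  | O => (fun _ => 1, fun _ => -1)
  | S n => (fun t => 1 + RInt (fun s => a s * snd (picard n) s) 0 t,
            fun t => -1 + RInt (fun s => c s * fst (picard n) s) 0 t)
  end.

Definition sol_V (t : R) : R := real (Lim_seq (fun n => fst (picard n) t)).
Definition sol_P (t : R) : R := real (Lim_seq (fun n => snd (picard n) t)).

Lemma picard_at_0 n : fst (picard n) 0 = 1 /\ snd (picard n) 0 = -1.
Proof.
  destruct n as [|n]; [split; reflexivity|].
  simpl. rewrite !RInt_point. unfold zero; simpl. split; ring.
Qed.

Hypothesis a_cont : forall x, continuous a x.
Hypothesis c_cont : forall x, continuous c x.

Lemma picard_derive_of_continuous n :
  (forall t, continuous (fst (picard n)) t) -> (forall t, continuous (snd (picard n)) t) ->
  (forall t, is_derive (fst (picard (S n))) t (a t * snd (picard n) t)) /\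
  (forall t, is_derive (snd (picard (S n))) t (c t * fst (picard n) t)).
Proof.
  intros Hv Hp. split; intros t; simpl.
  - replace (a t * snd (picard n) t) with (0 + a t * snd (picard n) t) by ring.
    apply is_derive_plus_R; [apply is_derive_const_R|].
    apply (is_derive_RInt_0 (fun s => a s * snd (picard n) s)).
    intros x. now apply continuous_mult_R.
  - replace (c t * fst (picard n) t) with (0 + c t * fst (picard n) t) by ring.
    apply is_derive_plus_R; [apply is_derive_const_R|].
    apply (is_derive_RInt_0 (fun s => c s * fst (picard n) s)).
    intros x. now apply continuous_mult_R.
Qed.

Lemma picard_continuous n :
  (forall t, continuous (fst (picard n)) t) /\ (forall t, continuous (snd (picard n)) t).
Proof.
  induction n as [|n [Hv Hp]]; [split; intros; apply continuous_const|].
  destruct (picard_derive_of_continuous n Hv Hp) as [Dv Dp].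
  split; intros t; [apply (continuous_of_is_derive _ _ _ (Dv t))|
                    apply (continuous_of_is_derive _ _ _ (Dp t))].
Qed.

Lemma picard_derive n :
  (forall t, is_derive (fst (picard (S n))) t (a t * snd (picard n) t)) /\
  (forall t, is_derive (snd (picard (S n))) t (c t * fst (picard n) t)).
Proof. apply picard_derive_of_continuous; apply picard_continuous. Qed.

Variable K : R.
Hypothesis K_ge0 : 0 <= K.
Hypothesis a_bound : forall x, Rabs (a x) <= K.
Hypothesis c_bound : forall x, Rabs (c x) <= K.

Lemma picard_increment_bound n t :
  Rabs (fst (picard (S n)) t - fst (picard n) t) <= (K * Rabs t) ^ S n / INR (fact (S n)) /\
  Rabs (snd (picard (S n)) t - snd (picard n) t) <= (K * Rabs t) ^ S n / INR (fact (S n)).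
Proof.
  revert t. induction n as [|n IH]; intros t.
  - destruct (picard_derive 0) as [Dv Dp].
    split.
    + apply (Rabs_le_pow_div_fact (fun s => fst (picard 1) s - fst (picard 0) s)
        (fun s => a s * snd (picard 0) s - 0)); [exact K_ge0| | |].
      * destruct (picard_at_0 1) as [H _]. rewrite H. simpl. ring.
      * intros s.
        exact (is_derive_minus_R (fst (picard 1)) (fst (picard 0)) s _ _ (Dv s) (is_derive_const_R 1 s)).
      * intros s. change (snd (picard 0) s) with (-1). change (INR (fact 0)) with 1.
        rewrite pow_O. replace (a s * -1 - 0) with (- a s) by ring. rewrite Rabs_Ropp.
        specialize (a_bound s). lra.
    + apply (Rabs_le_pow_div_fact (fun s => snd (picard 1) s - snd (picard 0) s)
        (fun s => c s * fst (picard 0) s - 0)); [exact K_ge0| | |].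
      * destruct (picard_at_0 1) as [_ H]. rewrite H. simpl. ring.
      * intros s.
        exact (is_derive_minus_R (snd (picard 1)) (snd (picard 0)) s _ _ (Dp s) (is_derive_const_R (-1) s)).
      * intros s. change (fst (picard 0) s) with 1. change (INR (fact 0)) with 1.
        rewrite pow_O. replace (c s * 1 - 0) with (c s) by ring.
        specialize (c_bound s). lra.
  - destruct (picard_derive n) as [Dv Dp]. destruct (picard_derive (S n)) as [Dv' Dp'].
    destruct (picard_at_0 (S n)) as [V1 P1]. destruct (picard_at_0 (S (S n))) as [V2 P2].
    split.
    + apply (Rabs_le_pow_div_fact (fun s => fst (picard (S (S n))) s - fst (picard (S n)) s)
        (fun s => a s * (snd (picard (S n)) s - snd (picard n) s))); [exact K_ge0| | |].
      * rewrite V1, V2. ring.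
      * intros s. replace (a s * (snd (picard (S n)) s - snd (picard n) s))
          with (a s * snd (picard (S n)) s - a s * snd (picard n) s) by ring.
        exact (is_derive_minus_R (fst (picard (S (S n)))) (fst (picard (S n))) s _ _ (Dv' s) (Dv s)).
      * intros s. rewrite Rabs_mult. unfold Rdiv. rewrite Rmult_assoc.
        apply Rmult_le_compat; [apply Rabs_pos|apply Rabs_pos|apply a_bound|apply (IH s)].
    + apply (Rabs_le_pow_div_fact (fun s => snd (picard (S (S n))) s - snd (picard (S n)) s)
        (fun s => c s * (fst (picard (S n)) s - fst (picard n) s))); [exact K_ge0| | |].
      * rewrite P1, P2. ring.
      * intros s. replace (c s * (fst (picard (S n)) s - fst (picard n) s))
          with (c s * fst (picard (S n)) s - c s * fst (picard n) s) by ring.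
        exact (is_derive_minus_R (snd (picard (S (S n)))) (snd (picard (S n))) s _ _ (Dp' s) (Dp s)).
      * intros s. rewrite Rabs_mult. unfold Rdiv. rewrite Rmult_assoc.
        apply Rmult_le_compat; [apply Rabs_pos|apply Rabs_pos|apply c_bound|apply (IH s)].
Qed.

Lemma picard_converges T x n : Rabs x <= T ->
  Lim_seq (fun n => fst (picard n) x) = Finite (sol_V x) /\
  Lim_seq (fun n => snd (picard n) x) = Finite (sol_P x) /\
  Rabs (fst (picard n) x - sol_V x) <= 2 * exp (2 * K * T) * (/ 2) ^ n /\
  Rabs (snd (picard n) x - sol_P x) <= 2 * exp (2 * K * T) * (/ 2) ^ n.
Proof.
  intros Hx.
  assert (Hinc : forall k, (K * Rabs x) ^ S k / INR (fact (S k)) <= exp (2 * K * T) * (/ 2) ^ k).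
  { intros k. eapply Rle_trans; [now apply (pow_div_fact_le_geometric K T x (S k))|].
    assert (0 < exp (2 * K * T)) by apply exp_pos.
    assert (0 <= (/ 2) ^ k) by (apply pow_le; lra). simpl. nra. }
  assert (HE : 0 <= exp (2 * K * T)) by (left; apply exp_pos).
  destruct (geometric_increments_limit (fun n => fst (picard n) x) (exp (2 * K * T)) HE)
    as [lv [Ev Bv]]; [intros k; eapply Rle_trans; [apply (picard_increment_bound k x)|apply Hinc]|].
  destruct (geometric_increments_limit (fun n => snd (picard n) x) (exp (2 * K * T)) HE)
    as [lp [Ep Bp]]; [intros k; eapply Rle_trans; [apply (picard_increment_bound k x)|apply Hinc]|].
  unfold sol_V, sol_P. rewrite Ev, Ep. simpl. auto.
Qed.

Theorem sol_is_solution :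
  (forall t, is_derive sol_V t (a t * sol_P t)) /\
  (forall t, is_derive sol_P t (c t * sol_V t)) /\
  sol_V 0 = 1 /\ sol_P 0 = -1.
Proof.
  assert (HM : forall T, 0 <= 2 * (K + 1) * exp (2 * K * T))
    by (intros T; pose proof (exp_pos (2 * K * T)); apply Rmult_le_pos; lra).
  assert (Hshift : forall T n,
            2 * exp (2 * K * T) * (/ 2) ^ S n <= 2 * (K + 1) * exp (2 * K * T) * (/ 2) ^ n).
  { intros T n. assert (0 < exp (2 * K * T)) by apply exp_pos.
    assert (0 <= (/ 2) ^ n) by (apply pow_le; lra).
    assert (0 <= K * (exp (2 * K * T) * (/ 2) ^ n)) by (apply Rmult_le_pos; [auto|nra]).
    simpl. nra. }
  assert (Hscale : forall T n k u, Rabs k <= K -> Rabs u <= 2 * exp (2 * K * T) * (/ 2) ^ n ->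
            Rabs (k * u) <= 2 * (K + 1) * exp (2 * K * T) * (/ 2) ^ n).
  { intros T n k u Hk Hu. rewrite Rabs_mult.
    assert (0 < exp (2 * K * T)) by apply exp_pos. assert (0 <= (/ 2) ^ n) by (apply pow_le; lra).
    pose proof (Rabs_pos k). pose proof (Rabs_pos u). nra. }
  split; [|split; [|split]].
  - apply (is_derive_geometric_limit (fun n => fst (picard (S n))) (fun n t => a t * snd (picard n) t)
             sol_V (fun t => a t * sol_P t) (fun T => 2 * (K + 1) * exp (2 * K * T))); auto.
    + intros n t. apply picard_derive.
    + intros n t. apply continuous_mult_R; [apply a_cont|apply picard_continuous].
    + intros T x n Hx. eapply Rle_trans; [apply (picard_converges T x (S n) Hx)|apply Hshift].
    + intros T x n Hx. rewrite <- Rmult_minus_distr_l.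
      apply Hscale; [apply a_bound|apply (picard_converges T x n Hx)].
  - apply (is_derive_geometric_limit (fun n => snd (picard (S n))) (fun n t => c t * fst (picard n) t)
             sol_P (fun t => c t * sol_V t) (fun T => 2 * (K + 1) * exp (2 * K * T))); auto.
    + intros n t. apply picard_derive.
    + intros n t. apply continuous_mult_R; [apply c_cont|apply picard_continuous].
    + intros T x n Hx. eapply Rle_trans; [apply (picard_converges T x (S n) Hx)|apply Hshift].
    + intros T x n Hx. rewrite <- Rmult_minus_distr_l.
      apply Hscale; [apply c_bound|apply (picard_converges T x n Hx)].
  - unfold sol_V. rewrite (Lim_seq_ext _ (fun _ => 1)), Lim_seq_const; [reflexivity|].
    intros n. apply picard_at_0.
  - unfold sol_P. rewrite (Lim_seq_ext _ (fun _ => -1)), Lim_seq_const; [reflexivity|].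
    intros n. apply picard_at_0.
Qed.

(* [V^2 + P^2] decays at most like [exp (-2 K t)]. *)
Lemma solution_no_common_zero (V P : R -> R) z :
  (forall t, is_derive V t (a t * P t)) -> (forall t, is_derive P t (c t * V t)) ->
  0 <= z -> V z = 0 -> P z = 0 -> V 0 = 0 /\ P 0 = 0.
Proof.
  intros HV HP Hz HVz HPz.
  set (G := fun s => (V s ^ 2 + P s ^ 2) * exp (2 * K * s)).
  assert (HG : G 0 <= G z).
  { apply (nondecreasing_of_derive_nonneg G (fun s => (2 * V s * (a s * P s) + 2 * P s * (c s * V s))
             * exp (2 * K * s) + (V s ^ 2 + P s ^ 2) * (2 * K * exp (2 * K * s)))); [lra| |].
    - intros s _. apply (is_derive_mult_R (fun s => V s ^ 2 + P s ^ 2) (fun s => exp (2 * K * s))).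
      + apply (is_derive_plus_R (fun s => V s ^ 2) (fun s => P s ^ 2)); apply is_derive_sqr_R; auto.
      + auto_derive; auto. ring.
    - intros s _. assert (0 < exp (2 * K * s)) by apply exp_pos.
      pose proof (Rabs_mult_2xy_le (a s) (V s) (P s)) as Ha.
      pose proof (Rabs_mult_2xy_le (c s) (V s) (P s)) as Hc.
      apply Rabs_le_between in Ha. apply Rabs_le_between in Hc.
      assert (0 <= V s ^ 2 + P s ^ 2) by (pose proof (pow2_ge_0 (V s)); pose proof (pow2_ge_0 (P s)); lra).
      assert (Rabs (a s) * (V s ^ 2 + P s ^ 2) <= K * (V s ^ 2 + P s ^ 2))
        by (apply Rmult_le_compat_r; auto).
      assert (Rabs (c s) * (V s ^ 2 + P s ^ 2) <= K * (V s ^ 2 + P s ^ 2))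
        by (apply Rmult_le_compat_r; auto).
      replace ((2 * V s * (a s * P s) + 2 * P s * (c s * V s)) * exp (2 * K * s)
                 + (V s ^ 2 + P s ^ 2) * (2 * K * exp (2 * K * s)))
        with ((a s * (2 * V s * P s) + c s * (2 * V s * P s) + 2 * K * (V s ^ 2 + P s ^ 2))
                * exp (2 * K * s)) by ring.
      apply Rmult_le_pos; lra. }
  unfold G in HG. rewrite HVz, HPz, Rmult_0_r, exp_0 in HG.
  pose proof (pow2_ge_0 (V 0)). pose proof (pow2_ge_0 (P 0)).
  split; nra.
Qed.

Lemma solution_difference_sqr_le (V P V0 P0 c0 : R -> R) (T M e : R) :
  (forall t, is_derive V t (a t * P t)) -> (forall t, is_derive P t (c t * V t)) ->
  (forall t, is_derive V0 t (a t * P0 t)) -> (forall t, is_derive P0 t (c0 t * V0 t)) ->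
  V 0 = V0 0 -> P 0 = P0 0 -> 0 <= T ->
  (forall s, 0 <= s <= T -> Rabs (c s - c0 s) <= e) ->
  (forall s, 0 <= s <= T -> V0 s ^ 2 <= M) ->
  (V T - V0 T) ^ 2 <= e ^ 2 * M / (2 * K + 1) * exp ((2 * K + 1) * T).
Proof.
  intros HV HP HV0 HP0 EV EP HT Hc HM.
  assert (HM0 : 0 <= M) by (pose proof (pow2_ge_0 (V0 0)); pose proof (HM 0 (conj (Rle_refl 0) HT)); lra).
  assert (He : 0 <= e) by (pose proof (Rabs_pos (c 0 - c0 0)); pose proof (Hc 0 (conj (Rle_refl 0) HT)); lra).
  set (E := fun s => (V s - V0 s) ^ 2 + (P s - P0 s) ^ 2).
  assert (HE : E T <= e ^ 2 * M / (2 * K + 1) * exp ((2 * K + 1) * T)).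
  { apply (gronwall_le E (fun s => 2 * (V s - V0 s) * (a s * P s - a s * P0 s)
                                  + 2 * (P s - P0 s) * (c s * V s - c0 s * V0 s)));
      [lra|apply Rmult_le_pos; [apply pow2_ge_0|auto]|auto| | |].
    - unfold E. rewrite EV, EP. ring.
    - intros s _. apply (is_derive_plus_R (fun s => (V s - V0 s) ^ 2) (fun s => (P s - P0 s) ^ 2)).
      + apply (is_derive_sqr_R (fun s => V s - V0 s)), is_derive_minus_R; auto.
      + apply (is_derive_sqr_R (fun s => P s - P0 s)), is_derive_minus_R; auto.
    - intros s Hs. unfold E.
      set (x := V s - V0 s). set (y := P s - P0 s). set (q := c s - c0 s).
      replace (2 * x * (a s * P s - a s * P0 s) + 2 * y * (c s * V s - c0 s * V0 s))
        with (a s * (2 * x * y) + c s * (2 * x * y) + 2 * y * (q * V0 s)) by (unfold x, y, q; ring).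
      pose proof (Rabs_mult_2xy_le (a s) x y) as Ha. pose proof (Rabs_mult_2xy_le (c s) x y) as Hcs.
      apply Rabs_le_between in Ha. apply Rabs_le_between in Hcs.
      assert (Hx2 : 0 <= x ^ 2) by apply pow2_ge_0. assert (Hy2 : 0 <= y ^ 2) by apply pow2_ge_0.
      assert (Rabs (a s) * (x ^ 2 + y ^ 2) <= K * (x ^ 2 + y ^ 2)) by (apply Rmult_le_compat_r; auto; lra).
      assert (Rabs (c s) * (x ^ 2 + y ^ 2) <= K * (x ^ 2 + y ^ 2)) by (apply Rmult_le_compat_r; auto; lra).
      assert (Hq : q ^ 2 <= e ^ 2)
        by (rewrite <- pow2_abs; apply pow_incr; split; [apply Rabs_pos|now apply Hc]).
      assert (Hyq : 2 * y * (q * V0 s) <= y ^ 2 + q ^ 2 * V0 s ^ 2)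
        by (pose proof (pow2_ge_0 (y - q * V0 s)); simpl in *; nra).
      assert (q ^ 2 * V0 s ^ 2 <= e ^ 2 * M)
        by (apply Rmult_le_compat; [apply pow2_ge_0|apply pow2_ge_0|auto|now apply HM]).
      lra. }
  unfold E in HE. pose proof (pow2_ge_0 (P T - P0 T)). lra.
Qed.

End LinearSystem.

Lemma is_derive_glue (f g : R -> R) x0 l : f x0 = g x0 ->
  is_derive f x0 l -> is_derive g x0 l ->
  is_derive (fun t => if Rle_dec t x0 then f t else g t) x0 l.
Proof.
  intros Hfg Hf Hg. apply is_derive_Reals. apply is_derive_Reals in Hf, Hg.
  intros eps Heps. destruct (Hf eps Heps) as [d1 H1]. destruct (Hg eps Heps) as [d2 H2].
  exists (mkposreal _ (Rmin_pos _ _ (cond_pos d1) (cond_pos d2))). intros k Hk0 Hk. simpl in Hk.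
  destruct (Rle_dec x0 x0) as [_|]; [|lra].
  destruct (Rle_dec (x0 + k) x0).
  - apply H1; auto. eapply Rlt_le_trans; [exact Hk|apply Rmin_l].
  - rewrite Hfg. apply H2; auto. eapply Rlt_le_trans; [exact Hk|apply Rmin_r].
Qed.

Section Cutoff.

Variable d : R.
Hypothesis d_pos : 0 < d.

(* The slope of [(1 - s^2)^2] vanishes at [s = 0] and [s = 1], so the glued [cutoff] is C^1. *)
Definition cutoff_ramp (t : R) : R := (1 - ((t - d) / d) ^ 2) ^ 2.
Definition cutoff_ramp_deriv (t : R) : R := - 4 * ((t - d) / d) * (1 - ((t - d) / d) ^ 2) / d.

Definition cutoff (t : R) : R :=
  if Rle_dec t d then 1 else if Rle_dec t (2 * d) then cutoff_ramp t else 0.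
Definition cutoff_deriv (t : R) : R :=
  if Rle_dec t d then 0 else if Rle_dec t (2 * d) then cutoff_ramp_deriv t else 0.

Lemma is_derive_cutoff_ramp t : is_derive cutoff_ramp t (cutoff_ramp_deriv t).
Proof. unfold cutoff_ramp, cutoff_ramp_deriv. auto_derive; [auto|field; lra]. Qed.

Lemma cutoff_ramp_ends :
  cutoff_ramp d = 1 /\ cutoff_ramp_deriv d = 0 /\ cutoff_ramp (2 * d) = 0 /\ cutoff_ramp_deriv (2 * d) = 0.
Proof.
  unfold cutoff_ramp, cutoff_ramp_deriv.
  replace ((d - d) / d) with 0 by (field; lra). replace ((2 * d - d) / d) with 1 by (field; lra).
  repeat split; field; lra.
Qed.

Lemma cutoff_le t : t <= d -> cutoff t = 1 /\ cutoff_deriv t = 0.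
Proof. intros Ht. unfold cutoff, cutoff_deriv. destruct (Rle_dec t d); [auto|lra]. Qed.

Lemma cutoff_ge t : 2 * d <= t -> cutoff t = 0.
Proof.
  intros Ht. unfold cutoff.
  destruct (Rle_dec t d); [lra|]. destruct (Rle_dec t (2 * d)); [|auto].
  replace t with (2 * d) by lra. now destruct cutoff_ramp_ends as [_ [_ [-> _]]].
Qed.

Lemma cutoff_range t : 0 <= cutoff t <= 1.
Proof.
  unfold cutoff, cutoff_ramp. destruct (Rle_dec t d); [lra|].
  destruct (Rle_dec t (2 * d)); [|lra].
  assert (Hs : 0 <= (t - d) / d <= 1).
  { split; [apply Rdiv_le_0_compat; lra|].
    apply Rmult_le_reg_r with d; auto. unfold Rdiv. rewrite Rmult_assoc, Rinv_l; lra. }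
  set (s := (t - d) / d) in *. assert (0 <= 1 - s ^ 2 <= 1) by (simpl; nra).
  split; [apply pow2_ge_0|simpl; nra].
Qed.

Lemma is_derive_cutoff t : is_derive cutoff t (cutoff_deriv t).
Proof.
  destruct cutoff_ramp_ends as [Hd1 [Hd2 [H2d1 H2d2]]].
  destruct (Rtotal_order t d) as [Ht|[->|Ht]];
    [| |destruct (Rtotal_order t (2 * d)) as [Ht2|[->|Ht2]]].
  - rewrite (proj2 (cutoff_le t (Rlt_le _ _ Ht))).
    apply (is_derive_ext_loc (fun _ => 1)); [|apply is_derive_const_R].
    apply (locally_interval _ t m_infty d); [exact I|exact Ht|].
    intros y _ Hy. symmetry. apply cutoff_le. simpl in Hy. lra.
  - rewrite (proj2 (cutoff_le d (Rle_refl d))).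
    apply (is_derive_ext_loc (fun t => if Rle_dec t d then 1 else cutoff_ramp t)).
    + apply (locally_interval _ d m_infty (2 * d)); [exact I|simpl; lra|].
      intros y _ Hy. simpl in Hy. unfold cutoff.
      destruct (Rle_dec y d); [auto|]. destruct (Rle_dec y (2 * d)); [auto|lra].
    + apply is_derive_glue; [auto|apply is_derive_const_R|].
      rewrite <- Hd2. apply is_derive_cutoff_ramp.
  - apply (is_derive_ext_loc cutoff_ramp).
    + apply (locally_interval _ t d (2 * d)); [exact Ht|exact Ht2|].
      intros y Hy1 Hy2. simpl in Hy1, Hy2. unfold cutoff.
      destruct (Rle_dec y d); [lra|]. destruct (Rle_dec y (2 * d)); [auto|lra].
    + unfold cutoff_deriv. destruct (Rle_dec t d); [lra|].
      destruct (Rle_dec t (2 * d)); [apply is_derive_cutoff_ramp|lra].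
  - replace (cutoff_deriv (2 * d)) with 0
      by (unfold cutoff_deriv; destruct (Rle_dec (2 * d) d); [lra|];
          destruct (Rle_dec (2 * d) (2 * d)); [auto|lra]).
    apply (is_derive_ext_loc (fun t => if Rle_dec t (2 * d) then cutoff_ramp t else 0)).
    + apply (locally_interval _ (2 * d) d p_infty); [simpl; lra|exact I|].
      intros y Hy _. simpl in Hy. unfold cutoff. destruct (Rle_dec y d); [lra|auto].
    + apply is_derive_glue; [auto| |apply is_derive_const_R].
      rewrite <- H2d2. apply is_derive_cutoff_ramp.
  - replace (cutoff_deriv t) with 0
      by (unfold cutoff_deriv; destruct (Rle_dec t d); [lra|]; destruct (Rle_dec t (2 * d)); [lra|auto]).
    apply (is_derive_ext_loc (fun _ => 0)); [|apply is_derive_const_R].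
    apply (locally_interval _ t (2 * d) p_infty); [exact Ht2|exact I|].
    intros y Hy _. symmetry. apply cutoff_ge. simpl in Hy. lra.
Qed.

End Cutoff.

Lemma continuity_pt_pos_near (f : R -> R) z : continuity_pt f z -> 0 < f z ->
  exists r, 0 < r /\ forall t, Rabs (t - z) < r -> 0 < f t.
Proof.
  intros Hc Hz. destruct (Hc (f z) Hz) as [r [Hr Hb]]. exists r. split; auto.
  intros t Ht. destruct (Req_dec t z) as [->|Hne]; auto.
  assert (Hd : R_dist (f t) (f z) < f z) by (apply Hb; repeat split; auto).
  unfold R_dist in Hd. apply Rabs_lt_between in Hd. lra.
Qed.

Lemma first_zero (f : R -> R) x y : x <= y -> (forall t, x <= t <= y -> continuity_pt f t) ->
  0 < f x -> f y <= 0 -> exists z, x < z <= y /\ f z = 0 /\ forall s, x <= s < z -> 0 < f s.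
Proof.
  intros Hxy Hc Hfx Hfy.
  set (S := fun t => x <= t <= y /\ forall s, x <= s <= t -> 0 < f s).
  assert (HSx : S x) by (split; [lra|intros s Hs; replace s with x by lra; auto]).
  destruct (completeness S) as [z [Hub Hlub]];
    [exists y; intros t [Ht _]; lra|now exists x|].
  assert (Hxz : x <= z) by now apply Hub.
  assert (Hzy : z <= y) by (apply Hlub; intros t [Ht _]; lra).
  assert (Hpos : forall s, x <= s < z -> 0 < f s).
  { intros s Hs. apply NNPP. intros Hn. assert (z <= s); [|lra].
    apply Hlub. intros t [Ht Hft]. destruct (Rle_or_lt t s); auto.
    exfalso. apply Hn, Hft. lra. }
  assert (Hxz' : x < z).
  { destruct (continuity_pt_pos_near f x (Hc x (conj (Rle_refl x) Hxy)) Hfx) as [r [Hr Hnear]].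
    destruct (Req_dec x y) as [<-|Hxy']; [lra|].
    assert (HS : S (Rmin y (x + r / 2)));
      [|pose proof (Hub _ HS); pose proof (Rmin_glb_lt y (x + r / 2) x); lra].
    split; [split; [apply Rmin_glb; lra|apply Rmin_l]|]. intros s Hs. apply Hnear.
    pose proof (Rmin_r y (x + r / 2)). apply Rabs_lt_between. lra. }
  assert (Hnn : 0 <= f z).
  { apply Rnot_lt_le. intros Hneg.
    destruct (continuity_pt_pos_near (fun t => - f t) z) as [r [Hr Hnear]];
      [apply continuity_pt_opp, Hc; lra|lra|].
    pose proof (Rmax_l x (z - r / 2)). pose proof (Rmax_r x (z - r / 2)).
    assert (Rmax x (z - r / 2) < z) by (apply Rmax_lub_lt; lra).
    specialize (Hpos (Rmax x (z - r / 2)) ltac:(lra)).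
    specialize (Hnear (Rmax x (z - r / 2)) ltac:(apply Rabs_lt_between; lra)). lra. }
  assert (Hfz : f z = 0).
  { destruct Hnn as [Hp|]; [exfalso|auto].
    destruct (Req_dec z y) as [->|Hzy']; [lra|].
    destruct (continuity_pt_pos_near f z (Hc z (conj Hxz Hzy)) Hp) as [r [Hr Hnear]].
    pose proof (Rmin_l y (z + r / 2)). pose proof (Rmin_r y (z + r / 2)).
    assert (Hs : z < Rmin y (z + r / 2)) by (apply Rmin_glb_lt; lra).
    assert (HS : S (Rmin y (z + r / 2))); [|specialize (Hub _ HS); lra].
    split; [lra|]. intros t Ht.
    destruct (Rlt_or_le t z); [apply Hpos; lra|].
    apply Hnear, Rabs_lt_between. lra. }
  exists z. auto.
Qed.

Lemma last_zero (f : R -> R) x y : x <= y -> (forall t, x <= t <= y -> continuity_pt f t) ->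
  f x <= 0 -> 0 < f y -> exists z, x <= z < y /\ f z = 0 /\ forall s, z < s <= y -> 0 < f s.
Proof.
  intros Hxy Hc Hfx Hfy.
  assert (Hc' : forall t, - y <= t <= - x -> continuity_pt (fun t => f (- t)) t).
  { intros t Ht. apply (continuity_pt_comp (fun t => - t) f).
    - apply continuity_pt_opp, derivable_continuous_pt, derivable_pt_id.
    - apply Hc. lra. }
  destruct (first_zero (fun t => f (- t)) (- y) (- x)) as [z [Hz1 [Hz2 Hz3]]];
    [lra|auto|now rewrite Ropp_involutive|now rewrite Ropp_involutive|].
  exists (- z). split; [lra|split; auto]. intros s Hs. rewrite <- (Ropp_involutive s). apply Hz3. lra.
Qed.

Lemma inf_exists (Z : R -> Prop) (lo : R) : (exists x, Z x) -> (forall x, Z x -> lo <= x) ->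
  exists l, (forall x, Z x -> l <= x) /\ (forall eps, 0 < eps -> exists x, Z x /\ x < l + eps).
Proof.
  intros [x0 Hx0] Hlo.
  destruct (completeness (fun y => Z (- y))) as [u [Hub Hlub]].
  - exists (- lo). intros y Hy. specialize (Hlo _ Hy). lra.
  - exists (- x0). now rewrite Ropp_involutive.
  - exists (- u). split.
    + intros x Hx. assert (- x <= u) by (apply Hub; now rewrite Ropp_involutive). lra.
    + intros eps Heps. apply NNPP. intros Hn.
      assert (u <= u - eps); [|lra].
      apply Hlub. intros y Hy. apply Rnot_lt_le. intros Hlt. apply Hn. exists (- y). split; [auto|lra].
Qed.

Lemma is_derive_neg_exists_right (u : R -> R) a l r : is_derive u a l -> u a = 0 -> l < 0 -> 0 < r ->
  exists t, a < t < a + r /\ u t < 0.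
Proof.
  intros Hd Ha Hl Hr. apply is_derive_Reals in Hd.
  destruct (Hd (- l / 2)) as [dl Hdl]; [lra|].
  assert (Hex : exists k, 0 < k < dl /\ k < r).
  { exists (Rmin (dl / 2) (r / 2)). pose proof (cond_pos dl).
    pose proof (Rmin_l (dl / 2) (r / 2)). pose proof (Rmin_r (dl / 2) (r / 2)).
    assert (0 < Rmin (dl / 2) (r / 2)) by (apply Rmin_pos; lra). lra. }
  destruct Hex as [k [[Hk Hkd] Hkr]].
  specialize (Hdl k (Rgt_not_eq _ _ Hk)). rewrite Rabs_right in Hdl by lra. specialize (Hdl Hkd).
  rewrite Ha in Hdl. apply Rabs_lt_between in Hdl.
  exists (a + k). split; [lra|].
  destruct (Rlt_or_le (u (a + k)) 0); auto. exfalso.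
  assert (0 <= (u (a + k) - 0) / k) by (apply Rdiv_le_0_compat; lra). lra.
Qed.

Lemma derive_nonneg_of_pos_right (u : R -> R) a l r : is_derive u a l -> u a = 0 -> 0 < r ->
  (forall s, a < s < a + r -> 0 < u s) -> 0 <= l.
Proof.
  intros Hd Ha Hr Hp. apply Rnot_lt_le. intros Hl.
  destruct (is_derive_neg_exists_right u a l r Hd Ha Hl Hr) as [t [Ht Hut]].
  specialize (Hp t Ht). lra.
Qed.

Lemma derive_nonpos_of_pos_left (u : R -> R) z l r : is_derive u z l -> u z = 0 -> 0 < r ->
  (forall s, z - r < s < z -> 0 < u s) -> l <= 0.
Proof.
  intros Hd Hz Hr Hp.
  assert (Hd' : is_derive (fun s => u (- s)) (- z) (- l)).
  { replace (- l) with (-1 * l) by ring.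
    apply (is_derive_comp u (fun s => - s)); [now rewrite Ropp_involutive|auto_derive; [auto|ring]]. }
  assert (0 <= - l); [|lra].
  apply (derive_nonneg_of_pos_right _ (- z) (- l) r Hd'); [now rewrite Ropp_involutive|auto|].
  intros s Hs. apply Hp. lra.
Qed.

Lemma wronskian_increasing (w u du gu f df F gf : R -> R) a z : a < z ->
  (forall t, is_derive u t (du t)) -> (forall t, is_derive (fun s => w s * du s) t (gu t)) ->
  (forall t, is_derive f t (df t)) -> (forall t, is_derive F t (gf t)) ->
  (forall t, a <= t <= z -> F t = w t * df t) ->
  (forall t, a < t < z -> 0 < f t * gu t - u t * gf t) ->
  f a * (w a * du a) - u a * F a < f z * (w z * du z) - u z * F z.
Proof.
  intros Haz Hu Hgu Hf Hgf HF Hpos.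
  set (W := fun t => f t * (w t * du t) - u t * F t).
  destruct (MVT_cor2 W (fun t => df t * (w t * du t) + f t * gu t - (du t * F t + u t * gf t)) a z Haz)
    as [c [Hc1 Hc2]].
  - intros c Hc. apply is_derive_Reals. unfold W.
    apply (is_derive_minus_R (fun t => f t * (w t * du t)) (fun t => u t * F t)).
    + apply (is_derive_mult_R f (fun t => w t * du t)); auto.
    + apply (is_derive_mult_R u F); auto.
  - rewrite HF in Hc1 by lra. specialize (Hpos c Hc2).
    assert (0 < (f c * gu c - u c * gf c) * (z - a)) by (apply Rmult_lt_0_compat; lra).
    unfold W in Hc1. lra.
Qed.

Section SturmComparison.

Variables (w q f df F gf : R -> R) (z0 : R).
Hypothesis w_pos : forall t, 0 <= t <= z0 -> 0 < w t.
Hypothesis w_0 : w 0 = 1.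
Hypothesis f_derive : forall t, is_derive f t (df t).
Hypothesis F_derive : forall t, is_derive F t (gf t).
Hypothesis F_flux : forall t, 0 <= t <= z0 -> F t = w t * df t.
Hypothesis f_pos : forall t, 0 <= t <= z0 -> 0 < f t.
Hypothesis f_robin : df 0 <= - f 0.
Hypothesis f_super : forall t, 0 <= t <= z0 -> gf t < w t * q t * f t.

Lemma sturm_no_positive_value (u du gu : R -> R) t1 :
  (forall t, is_derive u t (du t)) -> (forall t, is_derive (fun s => w s * du s) t (gu t)) ->
  (forall t, 0 <= t <= z0 -> gu t = w t * q t * u t) ->
  du 0 = - u 0 -> u z0 = 0 -> 0 <= t1 <= z0 -> 0 < u t1 -> False.
Proof.
  intros Hu Hgu Heq Hrobin Hz0 Ht1 Hut1.
  assert (Hc : forall t, continuity_pt u t) by (intros t; apply (continuity_pt_of_is_derive _ _ _ (Hu t))).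
  destruct (first_zero u t1 z0) as [z [Hz1 [Hz2 Hz3]]]; [lra|auto|auto|lra|].
  assert (Hcore : forall a, 0 <= a < z -> (forall s, a < s < z -> 0 < u s) ->
             0 <= f a * (w a * du a) - u a * F a -> False).
  { intros a Ha Hpa HWa.
    assert (Hduz : du z <= 0).
    { apply (derive_nonpos_of_pos_left u z (du z) (z - a)); auto; [lra|].
      intros s Hs. apply Hpa. lra. }
    assert (0 < f z * w z) by (apply Rmult_lt_0_compat; [apply f_pos|apply w_pos]; lra).
    assert (f z * (w z * du z) - u z * F z <= 0) by (rewrite Hz2; nra).
    enough (f a * (w a * du a) - u a * F a < f z * (w z * du z) - u z * F z) by lra.
    apply (wronskian_increasing w u du gu f df F gf a z); auto; [lra| |].
    - intros t Ht. apply F_flux. lra.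
    - intros t Ht. assert (0 < u t) by (apply Hpa; lra).
      rewrite Heq by lra. specialize (f_super t ltac:(lra)).
      replace (f t * (w t * q t * u t) - u t * gf t) with (u t * (w t * q t * f t - gf t)) by ring.
      apply Rmult_lt_0_compat; lra. }
  destruct (classic (exists s, 0 <= s <= t1 /\ u s <= 0)) as [[s [Hs Hus]]|Hn].
  - destruct (last_zero u s t1) as [a [Ha1 [Ha2 Ha3]]]; [lra|auto|auto|auto|].
    apply (Hcore a); [lra|intros r Hr; destruct (Rle_or_lt r t1); [apply Ha3|apply Hz3]; lra|].
    assert (0 <= du a).
    { apply (derive_nonneg_of_pos_right u a (du a) (t1 - a)); auto; [lra|].
      intros r Hr. apply Ha3. lra. }
    assert (0 < f a * w a) by (apply Rmult_lt_0_compat; [apply f_pos|apply w_pos]; lra).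
    rewrite Ha2. nra.
  - assert (Hp0 : forall s, 0 <= s <= t1 -> 0 < u s).
    { intros s Hs. apply Rnot_le_lt. intros Hus. apply Hn. eauto. }
    apply (Hcore 0); [lra|intros r Hr; destruct (Rle_or_lt r t1); [apply Hp0|apply Hz3]; lra|].
    rewrite w_0, Hrobin, F_flux, w_0 by lra.
    assert (0 < u 0) by (apply Hp0; lra). assert (0 < f 0) by (apply f_pos; lra).
    nra.
Qed.

Theorem sturm_comparison (u du gu : R -> R) :
  (forall t, is_derive u t (du t)) -> (forall t, is_derive (fun s => w s * du s) t (gu t)) ->
  (forall t, 0 <= t <= z0 -> gu t = w t * q t * u t) ->
  du 0 = - u 0 -> u z0 = 0 -> (exists t1, 0 <= t1 <= z0 /\ u t1 <> 0) -> False.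
Proof.
  intros Hu Hgu Heq Hrobin Hz0 [t1 [Ht1 Hut1]].
  destruct (Rlt_or_le 0 (u t1)) as [Hp|Hn].
  - exact (sturm_no_positive_value u du gu t1 Hu Hgu Heq Hrobin Hz0 Ht1 Hp).
  - apply (sturm_no_positive_value (fun t => - u t) (fun t => - du t) (fun t => - gu t) t1);
      [intros t; now apply is_derive_opp_R| |intros t Ht; rewrite Heq by auto; ring|
       rewrite Hrobin; ring|rewrite Hz0; ring|auto|lra].
    intros t. apply (is_derive_ext (fun s => - (w s * du s))); [intros s; simpl; ring|].
    now apply is_derive_opp_R.
Qed.

End SturmComparison.

Lemma wgt_0 h : wgt h 0 = 1.
Proof. unfold wgt. ring. Qed.


Definition expansion (h c : R) : R := -1 - sqrt h + (c - 1 / 2) * h.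


(* With [V = v] and [P = w v'] the eigenvalue equation becomes [V' = P / w], [P' = w (pot - lam) V]
   on [[0, delta]], and the Robin condition becomes [(V, P)(0) = (1, -1)]. To solve this on all of [R]
   the potential is frozen outside [[0, delta]] ([clamp]) and [1 / w] is multiplied by a cutoff
   vanishing beyond [2 delta], so that [w V' = cutoff * P] stays differentiable across the zero of [w]
   at [h^(-1/2)]. *)
Section Shooting.

Variables b rho h : R.
Hypothesis h_pos : 0 < h.
Hypothesis b_pos : 0 < b.
Hypothesis delta_pos : 0 < delta rho h.
Hypothesis delta_small : sqrt h * delta rho h <= 1 / 3.

Local Notation d := (delta rho h).

Definition clamp (t : R) : R := Rmax 0 (Rmin t d).

Definition coef_a (t : R) : R := cutoff d t / wgt h (Rmin t (2 * d)).
Definition coef_c (m : Z) (lam t : R) : R := wgt h (clamp t) * (pot b m h (clamp t) - lam).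
Definition coef_c_max (m : Z) (lam : R) : R := 3 * h * (Rabs (IZR m) + b) ^ 2 + Rabs lam.

Definition shoot_V (m : Z) (lam : R) : R -> R := sol_V coef_a (coef_c m lam).
Definition shoot_P (m : Z) (lam : R) : R -> R := sol_P coef_a (coef_c m lam).

Lemma clamp_range t : 0 <= clamp t <= d.
Proof. unfold clamp. split; [apply Rmax_l|]. apply Rmax_lub; [lra|apply Rmin_r]. Qed.

Lemma clamp_id t : 0 <= t <= d -> clamp t = t.
Proof. intros Ht. unfold clamp. rewrite Rmin_left, Rmax_right; lra. Qed.

Lemma clamp_lipschitz x y : Rabs (clamp x - clamp y) <= 1 * Rabs (x - y).
Proof.
  unfold clamp, Rmax, Rmin. destruct (Rle_dec x d), (Rle_dec y d);
  repeat match goal with |- context [Rle_dec ?a ?b] => destruct (Rle_dec a b) end; split_Rabs; lra.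
Qed.

Lemma wgt_ge_one_third t : t <= 2 * d -> 1 / 3 <= wgt h t.
Proof.
  intros Ht. unfold wgt. pose proof (sqrt_lt_R0 h h_pos).
  assert (sqrt h * t <= sqrt h * (2 * d)) by (apply Rmult_le_compat_l; lra). lra.
Qed.

Lemma wgt_bounds t : 0 <= t <= d -> 2 / 3 <= wgt h t <= 1.
Proof.
  intros Ht. unfold wgt. pose proof (sqrt_lt_R0 h h_pos).
  assert (sqrt h * t <= sqrt h * d) by (apply Rmult_le_compat_l; lra).
  assert (0 <= sqrt h * t) by (apply Rmult_le_pos; lra). lra.
Qed.

Lemma pot_bounds m t : 0 <= t <= d -> 0 <= pot b m h t <= 3 * h * (Rabs (IZR m) + b) ^ 2.
Proof.
  intros Ht. pose proof (wgt_bounds t Ht) as Hw. unfold pot.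
  set (w := wgt h t) in *.
  assert (HX : Rabs (IZR m - b / 2 * w ^ 2) <= Rabs (IZR m) + b).
  { eapply Rle_trans; [apply Rabs_triang|]. rewrite Rabs_Ropp.
    rewrite (Rabs_right (b / 2 * w ^ 2)) by (apply Rle_ge, Rmult_le_pos; [lra|apply pow2_ge_0]).
    assert (w ^ 2 <= 1) by (simpl; nra). nra. }
  assert (HX2 : (IZR m - b / 2 * w ^ 2) ^ 2 <= (Rabs (IZR m) + b) ^ 2)
    by (rewrite <- pow2_abs; apply pow_incr; split; [apply Rabs_pos|auto]).
  assert (Hw2 : 4 / 9 <= w ^ 2) by (simpl; nra).
  assert (Hhw : 0 <= h / w ^ 2 <= 9 / 4 * h).
  { split; [apply Rdiv_le_0_compat; lra|].
    apply Rmult_le_reg_r with (w ^ 2); [lra|]. unfold Rdiv. rewrite Rmult_assoc, Rinv_l by lra. nra. }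
  pose proof (pow2_ge_0 (IZR m - b / 2 * w ^ 2)). split; [apply Rmult_le_pos; lra|nra].
Qed.

Lemma coef_a_continuous t : continuous coef_a t.
Proof.
  unfold coef_a, Rdiv. apply continuous_mult_R.
  - apply (continuous_of_is_derive _ _ _ (is_derive_cutoff d delta_pos t)).
  - apply (continuous_comp (fun t => Rmin t (2 * d)) (fun s => / wgt h s)).
    + apply (continuous_lipschitz _ 1); [lra|]. intros; apply Rmin_lipschitz.
    + assert (Hw : 1 / 3 <= wgt h (Rmin t (2 * d))) by (apply wgt_ge_one_third, Rmin_r).
      apply (@ex_derive_continuous R_AbsRing R_NormedModule). unfold wgt in *. auto_derive. lra.
Qed.

Lemma coef_c_continuous m lam t : continuous (coef_c m lam) t.
Proof.
  unfold coef_c. apply (continuous_comp clamp (fun s => wgt h s * (pot b m h s - lam))).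
  - apply (continuous_lipschitz _ 1); [lra|]. intros; apply clamp_lipschitz.
  - assert (Hw : 2 / 3 <= wgt h (clamp t)) by apply (wgt_bounds _ (clamp_range t)).
    apply (@ex_derive_continuous R_AbsRing R_NormedModule). unfold pot, wgt in *. auto_derive.
    assert (0 < (1 + - (sqrt h * clamp t)) * ((1 + - (sqrt h * clamp t)) * 1))
      by (rewrite Rmult_1_r; apply Rmult_lt_0_compat; lra).
    lra.
Qed.

Lemma coef_a_bound t : Rabs (coef_a t) <= 3.
Proof.
  unfold coef_a.
  assert (Hw : 1 / 3 <= wgt h (Rmin t (2 * d))) by (apply wgt_ge_one_third, Rmin_r).
  pose proof (cutoff_range d delta_pos t).
  rewrite Rabs_right by (apply Rle_ge, Rdiv_le_0_compat; lra).
  apply Rmult_le_reg_r with (wgt h (Rmin t (2 * d))); [lra|].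
  unfold Rdiv. rewrite Rmult_assoc, Rinv_l by lra. lra.
Qed.

Lemma coef_c_bound m lam t : Rabs (coef_c m lam t) <= coef_c_max m lam.
Proof.
  unfold coef_c, coef_c_max.
  pose proof (clamp_range t) as Hs. set (s := clamp t) in *.
  pose proof (wgt_bounds s Hs). pose proof (pot_bounds m s Hs).
  rewrite Rabs_mult, (Rabs_right (wgt h s)) by lra.
  assert (Rabs (pot b m h s - lam) <= 3 * h * (Rabs (IZR m) + b) ^ 2 + Rabs lam).
  { eapply Rle_trans; [apply Rabs_triang|]. rewrite Rabs_Ropp, Rabs_right by lra. lra. }
  pose proof (Rabs_pos (pot b m h s - lam)). nra.
Qed.

Lemma coef_c_max_nonneg m lam : 0 <= coef_c_max m lam.
Proof.
  unfold coef_c_max. pose proof (pow2_ge_0 (Rabs (IZR m) + b)). pose proof (Rabs_pos lam). nra.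
Qed.

Lemma coef_a_on t : 0 <= t <= d -> coef_a t = / wgt h t.
Proof.
  intros Ht. unfold coef_a. rewrite (proj1 (cutoff_le d t (proj2 Ht))), Rmin_left by lra.
  unfold Rdiv. ring.
Qed.

Lemma coef_c_on m lam t : 0 <= t <= d -> coef_c m lam t = wgt h t * (pot b m h t - lam).
Proof. intros Ht. unfold coef_c. now rewrite clamp_id. Qed.

Lemma wgt_mul_coef_a t p : wgt h t * (coef_a t * p) = cutoff d t * p.
Proof.
  unfold coef_a. destruct (Rle_or_lt t (2 * d)).
  - rewrite Rmin_left by lra. assert (1 / 3 <= wgt h t) by (apply wgt_ge_one_third; lra).
    field. lra.
  - rewrite (cutoff_ge d delta_pos t) by lra. unfold Rdiv. ring.
Qed.

Lemma shoot_solution m lam :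
  (forall t, is_derive (shoot_V m lam) t (coef_a t * shoot_P m lam t)) /\
  (forall t, is_derive (shoot_P m lam) t (coef_c m lam t * shoot_V m lam t)) /\
  shoot_V m lam 0 = 1 /\ shoot_P m lam 0 = -1.
Proof.
  pose proof (coef_c_max_nonneg m lam).
  apply (sol_is_solution _ _ coef_a_continuous (coef_c_continuous m lam) (3 + coef_c_max m lam)); [lra| |];
    intros x; pose proof (coef_a_bound x); pose proof (coef_c_bound m lam x);
    pose proof (Rabs_pos (coef_a x)); pose proof (Rabs_pos (coef_c m lam x)); lra.
Qed.

Definition shoot_flux_deriv (m : Z) (lam t : R) : R :=
  cutoff_deriv d t * shoot_P m lam t + cutoff d t * (coef_c m lam t * shoot_V m lam t).

Lemma is_derive_shoot_flux m lam t :
  is_derive (fun s => wgt h s * (coef_a s * shoot_P m lam s)) t (shoot_flux_deriv m lam t).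
Proof.
  destruct (shoot_solution m lam) as [_ [HP _]].
  apply (is_derive_ext (fun s => cutoff d s * shoot_P m lam s));
    [intros s; symmetry; apply wgt_mul_coef_a|].
  apply is_derive_mult_R; [apply is_derive_cutoff; lra|apply HP].
Qed.

Lemma shoot_flux_deriv_on m lam t : 0 <= t <= d ->
  shoot_flux_deriv m lam t = wgt h t * (pot b m h t - lam) * shoot_V m lam t.
Proof.
  intros Ht. unfold shoot_flux_deriv.
  destruct (cutoff_le d t (proj2 Ht)) as [-> ->]. rewrite coef_c_on by auto. ring.
Qed.

Lemma shoot_is_eigenvalue m lam : shoot_V m lam d = 0 -> is_eigenvalue b rho m h lam.
Proof.
  intros Hz. destruct (shoot_solution m lam) as [HV [HP [HV0 HP0]]].
  exists (shoot_V m lam), (fun t => coef_a t * shoot_P m lam t), (shoot_flux_deriv m lam).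
  split; [|split; [|split; [|split; [|split]]]].
  - intros t. apply is_derive_Reals, HV.
  - intros t. apply is_derive_Reals, is_derive_shoot_flux.
  - intros t Ht. rewrite shoot_flux_deriv_on by auto.
    assert (2 / 3 <= wgt h t) by apply (wgt_bounds t Ht). field. lra.
  - rewrite coef_a_on, HV0, HP0, wgt_0 by lra. lra.
  - exact Hz.
  - exists 0. split; [lra|]. rewrite HV0. lra.
Qed.

Lemma shoot_no_common_zero m lam z : 0 <= z ->
  shoot_V m lam z = 0 -> shoot_P m lam z = 0 -> False.
Proof.
  intros Hz HVz HPz. destruct (shoot_solution m lam) as [HV [HP [HV0 HP0]]].
  pose proof (coef_c_max_nonneg m lam).
  assert (Ha : forall x, Rabs (coef_a x) <= 3 + coef_c_max m lam)
    by (intros x; pose proof (coef_a_bound x); lra).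
  assert (Hc : forall x, Rabs (coef_c m lam x) <= 3 + coef_c_max m lam)
    by (intros x; pose proof (coef_c_bound m lam x); lra).
  destruct (solution_no_common_zero _ _ _ Ha Hc _ _ z HV HP Hz HVz HPz) as [H0 _].
  rewrite HV0 in H0. lra.
Qed.

Lemma coef_c_sub m lam lam0 s : Rabs (coef_c m lam s - coef_c m lam0 s) <= Rabs (lam - lam0).
Proof.
  unfold coef_c.
  replace (wgt h (clamp s) * (pot b m h (clamp s) - lam) - wgt h (clamp s) * (pot b m h (clamp s) - lam0))
    with (- (lam - lam0) * wgt h (clamp s)) by ring.
  pose proof (wgt_bounds _ (clamp_range s)).
  rewrite Rabs_mult, Rabs_Ropp, (Rabs_right (wgt h (clamp s))) by lra.
  pose proof (Rabs_pos (lam - lam0)). nra.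
Qed.

Lemma shoot_V_sub_sqr_le m lam lam0 M t : Rabs (lam - lam0) < 1 -> 0 <= t <= d ->
  (forall s, 0 <= s <= d -> shoot_V m lam0 s ^ 2 <= M) ->
  (shoot_V m lam t - shoot_V m lam0 t) ^ 2
    <= Rabs (lam - lam0) ^ 2 * (M / (2 * (4 + coef_c_max m lam0) + 1)
                                * exp ((2 * (4 + coef_c_max m lam0) + 1) * d)).
Proof.
  intros Hl1 Ht HM.
  pose proof (coef_c_max_nonneg m lam0).
  assert (HM0 : 0 <= M) by (pose proof (pow2_ge_0 (shoot_V m lam0 0)); pose proof (HM 0 ltac:(lra)); lra).
  destruct (shoot_solution m lam) as [HV [HP [HV' HP']]].
  destruct (shoot_solution m lam0) as [HV0 [HP0 [HV0' HP0']]].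
  assert (Ha : forall x, Rabs (coef_a x) <= 4 + coef_c_max m lam0)
    by (intros x; pose proof (coef_a_bound x); lra).
  assert (Hc : forall x, Rabs (coef_c m lam x) <= 4 + coef_c_max m lam0).
  { intros x. eapply Rle_trans; [apply coef_c_bound|]. unfold coef_c_max.
    pose proof (Rabs_triang (lam - lam0) lam0) as Htri.
    replace (lam - lam0 + lam0) with lam in Htri by ring. lra. }
  eapply Rle_trans;
    [apply (solution_difference_sqr_le coef_a (coef_c m lam) (4 + coef_c_max m lam0) ltac:(lra) Ha Hc
              _ _ _ _ (coef_c m lam0) t M (Rabs (lam - lam0)) HV HP HV0 HP0);
       [congruence|congruence|lra|intros s _; apply coef_c_sub|intros s Hs; apply HM; lra]|].
  unfold Rdiv. rewrite !Rmult_assoc.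
  apply Rmult_le_compat_l; [apply pow2_ge_0|]. apply Rmult_le_compat_l; [lra|].
  apply Rmult_le_compat_l; [left; apply Rinv_0_lt_compat; lra|].
  apply exp_le_compat, Rmult_le_compat_l; lra.
Qed.

Lemma shoot_V_continuous_in_lam m lam0 eta : 0 < eta ->
  exists r, 0 < r /\ forall lam, Rabs (lam - lam0) < r -> forall t, 0 <= t <= d ->
    Rabs (shoot_V m lam t - shoot_V m lam0 t) < eta.
Proof.
  intros Heta.
  destruct (shoot_solution m lam0) as [HV0 _].
  destruct (continuity_ab_maj (fun t => shoot_V m lam0 t ^ 2) 0 d) as [tM [HM _]]; [lra| |].
  { intros t _. apply (continuity_pt_of_is_derive _ _ _ (is_derive_sqr_R _ _ _ (HV0 t))). }
  pose proof (coef_c_max_nonneg m lam0).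
  pose (C := shoot_V m lam0 tM ^ 2 / (2 * (4 + coef_c_max m lam0) + 1)
             * exp ((2 * (4 + coef_c_max m lam0) + 1) * d)).
  assert (HC : 0 <= C).
  { apply Rmult_le_pos; [apply Rdiv_le_0_compat; [apply pow2_ge_0|lra]|left; apply exp_pos]. }
  exists (Rmin 1 (eta / (C + 1))). split; [apply Rmin_pos; [lra|apply Rdiv_lt_0_compat; lra]|].
  intros lam Hlam t Ht.
  assert (Hl1 : Rabs (lam - lam0) < 1) by (eapply Rlt_le_trans; [exact Hlam|apply Rmin_l]).
  assert (Hl2 : Rabs (lam - lam0) < eta / (C + 1)) by (eapply Rlt_le_trans; [exact Hlam|apply Rmin_r]).
  assert (HE := shoot_V_sub_sqr_le m lam lam0 _ t Hl1 Ht HM). fold C in HE. clearbody C.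
  assert (Hz : Rabs (lam - lam0) * (C + 1) < eta).
  { replace eta with (eta / (C + 1) * (C + 1)) by (field; lra).
    apply Rmult_lt_compat_r; lra. }
  pose proof (Rabs_pos (lam - lam0)).
  assert (Rabs (lam - lam0) ^ 2 * C <= (Rabs (lam - lam0) * (C + 1)) ^ 2).
  { rewrite Rpow_mult_distr. apply Rmult_le_compat_l; [apply pow2_ge_0|simpl; nra]. }
  assert (0 <= Rabs (lam - lam0) * (C + 1)) by (apply Rmult_le_pos; lra).
  assert ((Rabs (lam - lam0) * (C + 1)) ^ 2 < eta ^ 2) by (simpl; nra).
  apply Rabs_def1; nra.
Qed.


Lemma sqrt_h_mul_delta_bounds t : 0 <= t <= d -> 0 <= sqrt h * t <= sqrt h * d.
Proof.
  intros Ht. pose proof (sqrt_lt_R0 h h_pos).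
  split; [apply Rmult_le_pos|apply Rmult_le_compat_l]; lra.
Qed.

Lemma abs_m_minus_half_b A m : Rabs (IZR m) <= A -> Rabs (IZR m - b / 2) <= A + b / 2.
Proof.
  intros Hm. eapply Rle_trans; [apply Rabs_triang|].
  rewrite Rabs_Ropp, (Rabs_right (b / 2)) by lra. lra.
Qed.

Lemma wgt_mul_pot_shift m t : 0 <= t <= d ->
  let c := b / 2 * (1 - wgt h t ^ 2) in
  wgt h t * pot b m h t = h * (IZR m - b / 2 + c) ^ 2 / wgt h t /\ 0 <= c <= b * (sqrt h * d).
Proof.
  intros Ht c. pose proof (wgt_bounds t Ht) as Hw. pose proof (sqrt_h_mul_delta_bounds t Ht).
  split; [unfold pot, c; field; lra|].
  assert (Hw1 : wgt h t = 1 - sqrt h * t) by reflexivity.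
  unfold c. split; [apply Rmult_le_pos; [lra|simpl; nra]|].
  assert (1 - wgt h t ^ 2 <= 2 * (sqrt h * d)) by (rewrite Hw1; simpl; nra).
  replace (b * (sqrt h * d)) with (b / 2 * (2 * (sqrt h * d))) by field.
  apply Rmult_le_compat_l; lra.
Qed.

Lemma wgt_pot_lower A m t : Rabs (IZR m) <= A -> 0 <= t <= d ->
  h * ((IZR m - b / 2) ^ 2 - (2 * A + b) * b * (sqrt h * d)) <= wgt h t * pot b m h t.
Proof.
  intros Hm Ht. pose proof (wgt_bounds t Ht) as Hw.
  destruct (wgt_mul_pot_shift m t Ht) as [-> Hc].
  pose proof (abs_m_minus_half_b A m Hm) as HY.
  set (c := b / 2 * (1 - wgt h t ^ 2)) in *. set (Y := IZR m - b / 2) in *.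
  set (w := wgt h t) in *. set (ed := sqrt h * d) in *. clearbody c Y w ed.
  assert (HYc : - (Rabs Y * c) <= Y * c)
    by (destruct (Rle_or_lt 0 Y); [rewrite Rabs_right|rewrite Rabs_left]; nra).
  assert (Rabs Y * c <= (A + b / 2) * (b * ed)) by (apply Rmult_le_compat; [apply Rabs_pos|lra|auto|lra]).
  assert (H2 : Y ^ 2 - (2 * A + b) * b * ed <= (Y + c) ^ 2) by (simpl; nra).
  assert (Hinv : 1 <= / w) by (rewrite <- Rinv_1; apply Rinv_le_contravar; lra).
  assert (0 <= (Y + c) ^ 2) by apply pow2_ge_0.
  apply Rle_trans with (h * (Y + c) ^ 2); [apply Rmult_le_compat_l; lra|].
  unfold Rdiv. rewrite Rmult_assoc. apply Rmult_le_compat_l; [lra|]. nra.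
Qed.

Lemma wgt_pot_upper A m t : Rabs (IZR m) <= A -> 0 <= t <= d ->
  wgt h t * pot b m h t <= h * ((IZR m - b / 2) ^ 2 + 2 * (A + 2 * b) ^ 2 * (sqrt h * d)).
Proof.
  intros Hm Ht. pose proof (wgt_bounds t Ht) as Hw. pose proof (sqrt_h_mul_delta_bounds t Ht) as Het.
  destruct (wgt_mul_pot_shift m t Ht) as [-> Hc].
  pose proof (abs_m_minus_half_b A m Hm) as HY.
  assert (HA : 0 <= A) by (pose proof (Rabs_pos (IZR m)); lra).
  assert (Hw1 : wgt h t = 1 - sqrt h * t) by reflexivity.
  set (c := b / 2 * (1 - wgt h t ^ 2)) in *. set (Y := IZR m - b / 2) in *.
  set (w := wgt h t) in *. set (ed := sqrt h * d) in *. set (et := sqrt h * t) in *.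
  clearbody c Y w ed et.
  assert (HY2 : Y ^ 2 <= (A + b / 2) ^ 2)
    by (rewrite <- pow2_abs; apply pow_incr; split; [apply Rabs_pos|auto]).
  assert (H2 : (Y + c) ^ 2 <= Y ^ 2 + ed * (2 * (A + b / 2) * b + b ^ 2 / 3)).
  { assert (Y * c <= (A + b / 2) * (b * ed)).
    { apply Rle_trans with (Rabs Y * c); [apply Rmult_le_compat_r; [lra|apply Rle_abs]|].
      apply Rmult_le_compat; [apply Rabs_pos|lra|auto|lra]. }
    assert (c ^ 2 <= (b * ed) ^ 2) by (apply pow_incr; lra).
    assert ((b * ed) ^ 2 <= ed * (b ^ 2 / 3)).
    { replace ((b * ed) ^ 2) with (b ^ 2 * ed * ed) by ring.
      replace (ed * (b ^ 2 / 3)) with (b ^ 2 * ed * (1 / 3)) by field.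
      apply Rmult_le_compat_l; [apply Rmult_le_pos; [apply pow2_ge_0|lra]|lra]. }
    replace ((Y + c) ^ 2) with (Y ^ 2 + 2 * (Y * c) + c ^ 2) by ring. lra. }
  assert (Hiw : / w <= 1 + 3 / 2 * ed).
  { apply Rmult_le_reg_r with w; [lra|]. rewrite Rinv_l by lra. nra. }
  assert (Hiw0 : 0 < / w) by (apply Rinv_0_lt_compat; lra).
  unfold Rdiv. rewrite Rmult_assoc. apply Rmult_le_compat_l; [lra|].
  assert (0 <= (Y + c) ^ 2) by apply pow2_ge_0.
  apply Rle_trans with ((Y ^ 2 + ed * (2 * (A + b / 2) * b + b ^ 2 / 3)) * (1 + 3 / 2 * ed));
    [apply Rmult_le_compat; auto; lra|].
  assert (0 <= Y ^ 2) by apply pow2_ge_0.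
  assert (0 <= ed * (2 * (A + b / 2) * b + b ^ 2 / 3)) by (apply Rmult_le_pos; [lra|nra]).
  simpl. nra.
Qed.


(* A perturbation of the half-line ground state [exp (-t)]: a positive strict supersolution
   below the expected eigenvalue. *)
Definition low_phi (t : R) : R := exp (- (t - h * t ^ 2 / 4)).
Definition low_phi_deriv (t : R) : R := - (1 - h * t / 2) * low_phi t.
Definition low_flux_deriv (t : R) : R :=
  (sqrt h * (1 - h * t / 2) + wgt h t * h / 2 + wgt h t * (1 - h * t / 2) ^ 2) * low_phi t.

Lemma is_derive_low_phi t : is_derive low_phi t (low_phi_deriv t).
Proof. apply is_derive_exp_comp. auto_derive; [auto|field]. Qed.

Lemma is_derive_low_flux t : is_derive (fun s => wgt h s * low_phi_deriv s) t (low_flux_deriv t).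
Proof.
  apply (is_derive_ext (fun s => (wgt h s * - (1 - h * s / 2)) * exp (- (s - h * s ^ 2 / 4))));
    [intros s; unfold low_phi_deriv, low_phi; simpl; ring|].
  apply (is_derive_mult_exp _ _ t (sqrt h * (1 - h * t / 2) + wgt h t * h / 2) (- (1 - h * t / 2)));
    [unfold wgt; auto_derive; [auto|field]|auto_derive; [auto|field]|unfold low_flux_deriv, low_phi; ring].
Qed.

Lemma low_flux_le A m beta sigma t : Rabs (IZR m) <= A -> 0 <= beta <= (IZR m - b / 2) ^ 2 ->
  0 <= t <= d -> 0 < sigma ->
  sqrt h * d ^ 2 + h * d ^ 2 / 4 + (2 * A + b) * b * (sqrt h * d) <= 2 / 3 * sigma ->
  sqrt h * (1 - h * t / 2) + wgt h t * h / 2 + wgt h t * (1 - h * t / 2) ^ 2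
    <= wgt h t * (pot b m h t - expansion h (beta - sigma)).
Proof.
  intros Hm Hbeta Ht Hs Hsmall.
  pose proof (wgt_pot_lower A m t Hm Ht) as HL. pose proof (wgt_bounds t Ht) as Hw.
  pose proof (sqrt_h_mul_delta_bounds t Ht) as Het.
  assert (He : 0 < sqrt h) by now apply sqrt_lt_R0.
  assert (Hhe : h = sqrt h * sqrt h) by (symmetry; apply sqrt_sqrt; lra).
  assert (Hw1 : wgt h t = 1 - sqrt h * t) by reflexivity.
  set (e1 := (2 * A + b) * b * (sqrt h * d)) in *.
  assert (Hid : wgt h t * (pot b m h t - expansion h (beta - sigma))
                - (sqrt h * (1 - h * t / 2) + wgt h t * h / 2 + wgt h t * (1 - h * t / 2) ^ 2)
              = (wgt h t * pot b m h t - h * beta + h * e1)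
                + h * (beta * sqrt h * t - e1 + wgt h t * sigma - sqrt h * t ^ 2
                       - wgt h t * h * t ^ 2 / 4 + sqrt h * t / 2)).
  { unfold expansion. rewrite Hw1. set (e := sqrt h) in *. rewrite Hhe. field. }
  set (P := pot b m h t) in *. set (w := wgt h t) in *. set (e := sqrt h) in *.
  clearbody e1 P w e.
  assert (h * beta <= h * (IZR m - b / 2) ^ 2) by (apply Rmult_le_compat_l; lra).
  assert (0 <= beta * e * t) by (apply Rmult_le_pos; [apply Rmult_le_pos|]; lra).
  assert (e * t ^ 2 <= e * d ^ 2) by (apply Rmult_le_compat_l; [lra|apply pow_incr; lra]).
  assert (w * h * t ^ 2 / 4 <= h * d ^ 2 / 4).
  { assert (t ^ 2 <= d ^ 2) by (apply pow_incr; lra).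
    assert (0 <= h * t ^ 2) by (apply Rmult_le_pos; [lra|apply pow2_ge_0]).
    assert (h * t ^ 2 <= h * d ^ 2) by (apply Rmult_le_compat_l; lra).
    replace (w * h * t ^ 2 / 4) with (w * (h * t ^ 2) / 4) by field. nra. }
  assert (2 / 3 * sigma <= w * sigma) by (apply Rmult_le_compat_r; lra).
  assert (0 <= h * (beta * e * t - e1 + w * sigma - e * t ^ 2 - w * h * t ^ 2 / 4 + e * t / 2))
    by (apply Rmult_le_pos; lra).
  lra.
Qed.

Lemma eigenfunction_flux_eq m mu (g u : R -> R) t : 0 <= t <= d ->
  - g t / wgt h t + pot b m h t * u t = mu * u t -> g t = wgt h t * (pot b m h t - mu) * u t.
Proof.
  intros Ht H. pose proof (wgt_bounds t Ht).
  apply Rmult_eq_reg_r with (/ wgt h t); [|apply Rinv_neq_0_compat; lra].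
  replace (g t * / wgt h t) with (pot b m h t * u t - mu * u t) by (unfold Rdiv in H; lra).
  field. lra.
Qed.

Lemma no_eigenfunction_below A m beta sigma mu z0 (u du g : R -> R) :
  Rabs (IZR m) <= A -> 0 <= beta <= (IZR m - b / 2) ^ 2 -> 0 < sigma ->
  sqrt h * d ^ 2 + h * d ^ 2 / 4 + (2 * A + b) * b * (sqrt h * d) <= 2 / 3 * sigma ->
  0 < z0 <= d ->
  (forall t, is_derive u t (du t)) -> (forall t, is_derive (fun s => wgt h s * du s) t (g t)) ->
  (forall t, 0 <= t <= z0 -> - g t / wgt h t + pot b m h t * u t = mu * u t) ->
  du 0 = - u 0 -> u z0 = 0 -> (exists t1, 0 <= t1 <= z0 /\ u t1 <> 0) ->
  expansion h (beta - sigma) <= mu.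
Proof.
  intros Hm Hbeta Hs Hsmall Hz0 Hu Hg Heq Hrobin Hz Hnz.
  apply Rnot_lt_le. intros Hmu.
  assert (Hw : forall t, 0 <= t <= z0 -> 2 / 3 <= wgt h t) by (intros t Ht; apply wgt_bounds; lra).
  refine (sturm_comparison (wgt h) (fun t => pot b m h t - mu) low_phi low_phi_deriv
            (fun s => wgt h s * low_phi_deriv s) low_flux_deriv z0 _ (wgt_0 h) is_derive_low_phi
            is_derive_low_flux (fun t _ => eq_refl) _ _ _ u du g Hu Hg _ Hrobin Hz Hnz).
  - intros t Ht. specialize (Hw t Ht). lra.
  - intros t _. apply exp_pos.
  - unfold low_phi_deriv. lra.
  - intros t Ht. unfold low_flux_deriv.
    pose proof (low_flux_le A m beta sigma t Hm Hbeta ltac:(lra) Hs Hsmall).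
    assert (0 < low_phi t) by apply exp_pos. specialize (Hw t Ht).
    apply Rmult_lt_compat_r; [auto|].
    eapply Rle_lt_trans; [eauto|]. apply Rmult_lt_compat_l; lra.
  - intros t Ht. apply eigenfunction_flux_eq; [lra|auto].
Qed.

Lemma shoot_V_pos_below A m beta sigma lam :
  Rabs (IZR m) <= A -> 0 <= beta <= (IZR m - b / 2) ^ 2 -> 0 < sigma ->
  sqrt h * d ^ 2 + h * d ^ 2 / 4 + (2 * A + b) * b * (sqrt h * d) <= 2 / 3 * sigma ->
  lam < expansion h (beta - sigma) -> forall t, 0 <= t <= d -> 0 < shoot_V m lam t.
Proof.
  intros Hm Hbeta Hs Hsmall Hlam t1 Ht1. apply Rnot_le_lt. intros Hneg.
  destruct (shoot_solution m lam) as [HV [HP [HV0 HP0]]].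
  destruct (first_zero (shoot_V m lam) 0 t1) as [z [Hz1 [Hz2 Hz3]]];
    [lra|intros t _; apply (continuity_pt_of_is_derive _ _ _ (HV t))|lra|auto|].
  assert (expansion h (beta - sigma) <= lam); [|lra].
  apply (no_eigenfunction_below A m beta sigma lam z (shoot_V m lam)
           (fun t => coef_a t * shoot_P m lam t) (shoot_flux_deriv m lam)); auto;
    [lra|apply is_derive_shoot_flux| | |].
  - intros t Ht. rewrite shoot_flux_deriv_on by lra.
    assert (2 / 3 <= wgt h t) by (apply wgt_bounds; lra). field. lra.
  - rewrite coef_a_on, HV0, HP0, wgt_0 by lra. lra.
  - exists 0. split; [lra|]. lra.
Qed.


(* A subsolution above the expected eigenvalue; the [exp t] term enforces [up_psi kap d = 0] and is
   paid for by lowering the decay rate to [1 - kap] with [kap = 2 exp (- d)]. *)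
Definition up_f (kap t : R) : R := exp (- ((1 - kap) * t - h * t ^ 2 / 4)).
Definition up_q (kap : R) : R := exp (- ((1 - kap) * d - h * d ^ 2 / 4) - d).
Definition up_psi (kap t : R) : R := up_f kap t - up_q kap * exp t.
Definition up_psi_deriv (kap t : R) : R := - (1 - kap - h * t / 2) * up_f kap t - up_q kap * exp t.
Definition up_flux_deriv (kap t : R) : R :=
  (sqrt h * (1 - kap - h * t / 2) + wgt h t * h / 2 + wgt h t * (1 - kap - h * t / 2) ^ 2) * up_f kap t
  - (wgt h t - sqrt h) * (up_q kap * exp t).

Lemma is_derive_up_psi kap t : is_derive (up_psi kap) t (up_psi_deriv kap t).
Proof.
  apply (is_derive_minus_R (up_f kap) (fun t => up_q kap * exp t)).
  - apply is_derive_exp_comp. auto_derive; [auto|field].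
  - apply (is_derive_mult_exp (fun _ => up_q kap) (fun t => t) t 0 1);
      [apply is_derive_const_R|auto_derive; auto|ring].
Qed.

Lemma is_derive_up_flux kap t :
  is_derive (fun s => wgt h s * up_psi_deriv kap s) t (up_flux_deriv kap t).
Proof.
  apply (is_derive_ext (fun s => (wgt h s * - (1 - kap - h * s / 2)) * exp (- ((1 - kap) * s - h * s ^ 2 / 4))
                                 - (up_q kap * wgt h s) * exp s));
    [intros s; unfold up_psi_deriv, up_f; simpl; ring|].
  replace (up_flux_deriv kap t)
    with ((sqrt h * (1 - kap - h * t / 2) + wgt h t * h / 2
           + wgt h t * - (1 - kap - h * t / 2) * - (1 - kap - h * t / 2))
          * exp (- ((1 - kap) * t - h * t ^ 2 / 4))
          - (- up_q kap * sqrt h + up_q kap * wgt h t * 1) * exp t)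
    by (unfold up_flux_deriv, up_f; ring).
  apply is_derive_minus_R.
  - apply (is_derive_mult_exp _ _ t (sqrt h * (1 - kap - h * t / 2) + wgt h t * h / 2)
             (- (1 - kap - h * t / 2)));
      [unfold wgt; auto_derive; [auto|field]|auto_derive; [auto|field]|reflexivity].
  - apply (is_derive_mult_exp (fun s => up_q kap * wgt h s) (fun s => s) t (- up_q kap * sqrt h) 1);
      [unfold wgt; auto_derive; [auto|field]|auto_derive; auto|reflexivity].
Qed.

Lemma h_mul_delta_le : h <= 1 -> h * d <= 1 / 3.
Proof.
  intros Hh1. pose proof (sqrt_lt_R0 h h_pos).
  assert (sqrt h <= 1) by (rewrite <- sqrt_1; apply sqrt_le_1_alt; lra).
  replace (h * d) with (sqrt h * (sqrt h * d)) by (rewrite <- Rmult_assoc, sqrt_sqrt; lra).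
  assert (sqrt h * (sqrt h * d) <= 1 * (sqrt h * d)) by (apply Rmult_le_compat_r; [apply Rmult_le_pos|]; lra).
  lra.
Qed.

Lemma wgt_pot_shifted_ge A m sigma t : Rabs (IZR m) <= A -> 0 <= t <= d -> 0 < sigma ->
  ((A + b / 2) ^ 2 + sigma / 2) * sqrt h <= 1 ->
  wgt h t - sqrt h <= wgt h t * (pot b m h t - expansion h ((IZR m - b / 2) ^ 2 + sigma / 2)).
Proof.
  intros Hm Ht Hs Hsmall.
  pose proof (wgt_bounds t Ht) as Hw. pose proof (pot_bounds m t Ht) as [HP _].
  assert (He : 0 < sqrt h) by now apply sqrt_lt_R0.
  assert (Hhe : h = sqrt h * sqrt h) by (symmetry; apply sqrt_sqrt; lra).
  assert (HY2 : (IZR m - b / 2) ^ 2 <= (A + b / 2) ^ 2)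
    by (rewrite <- pow2_abs; apply pow_incr; split; [apply Rabs_pos|now apply abs_m_minus_half_b]).
  assert (HY20 : 0 <= (IZR m - b / 2) ^ 2) by apply pow2_ge_0.
  set (Y2 := (IZR m - b / 2) ^ 2) in *.
  assert (H1 : (Y2 + sigma / 2) * h <= sqrt h).
  { rewrite Hhe at 1. rewrite <- Rmult_assoc.
    assert ((Y2 + sigma / 2) * sqrt h <= ((A + b / 2) ^ 2 + sigma / 2) * sqrt h)
      by (apply Rmult_le_compat_r; lra).
    assert ((Y2 + sigma / 2) * sqrt h * sqrt h <= 1 * sqrt h) by (apply Rmult_le_compat_r; lra). lra. }
  assert (H2 : wgt h t * ((Y2 + sigma / 2) * h) <= (Y2 + sigma / 2) * h).
  { assert (0 <= (Y2 + sigma / 2) * h) by (apply Rmult_le_pos; lra).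
    assert (wgt h t * ((Y2 + sigma / 2) * h) <= 1 * ((Y2 + sigma / 2) * h)) by (apply Rmult_le_compat_r; lra).
    lra. }
  assert (0 <= wgt h t * pot b m h t) by (apply Rmult_le_pos; lra).
  assert (0 <= wgt h t * sqrt h) by (apply Rmult_le_pos; lra).
  assert (0 <= wgt h t * h) by (apply Rmult_le_pos; lra).
  replace (wgt h t * (pot b m h t - expansion h (Y2 + sigma / 2)))
    with (wgt h t * pot b m h t + wgt h t + wgt h t * sqrt h - wgt h t * ((Y2 + sigma / 2) * h)
          + wgt h t * h / 2)
    by (unfold expansion; field).
  lra.
Qed.

Section UpperComparison.

Variable kap : R.
Hypothesis h_le_1 : h <= 1.
Hypothesis kap_range : 0 <= kap <= 1 / 2.
Hypothesis kap_large : 2 * exp (- d) <= kap.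

Lemma up_q_le : up_q kap <= kap / 2.
Proof.
  pose proof h_mul_delta_le h_le_1.
  unfold up_q. apply Rle_trans with (exp (- d)); [|lra]. apply exp_le_compat.
  assert (0 <= d * (1 - kap - h * d / 4)) by (apply Rmult_le_pos; lra). simpl. nra.
Qed.

Lemma up_psi_delta : up_psi kap d = 0.
Proof.
  unfold up_psi, up_f, up_q. rewrite <- exp_plus.
  replace (_ - d + d) with (- ((1 - kap) * d - h * d ^ 2 / 4)) by ring. ring.
Qed.

Lemma up_psi_pos t : 0 <= t < d -> 0 < up_psi kap t.
Proof.
  intros Ht. pose proof h_mul_delta_le h_le_1.
  unfold up_psi, up_f, up_q. rewrite <- exp_plus.
  enough (exp (- ((1 - kap) * d - h * d ^ 2 / 4) - d + t) < exp (- ((1 - kap) * t - h * t ^ 2 / 4))) by lra.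
  apply exp_increasing.
  assert (h * t <= h * d) by (apply Rmult_le_compat_l; lra).
  assert (0 < (d - t) * (2 - kap - h * (t + d) / 4)) by (apply Rmult_lt_0_compat; lra).
  enough (0 < - ((1 - kap) * t - h * t ^ 2 / 4) - (- ((1 - kap) * d - h * d ^ 2 / 4) - d + t)) by lra.
  replace (- ((1 - kap) * t - h * t ^ 2 / 4) - (- ((1 - kap) * d - h * d ^ 2 / 4) - d + t))
    with ((d - t) * (2 - kap - h * (t + d) / 4)) by field.
  lra.
Qed.

Lemma up_psi_deriv_delta_neg : up_psi_deriv kap d < 0.
Proof.
  pose proof h_mul_delta_le h_le_1. unfold up_psi_deriv.
  assert (0 < up_f kap d) by apply exp_pos.
  assert (0 < up_q kap * exp d) by (apply Rmult_lt_0_compat; apply exp_pos).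
  assert (0 < (1 - kap - h * d / 2) * up_f kap d) by (apply Rmult_lt_0_compat; lra). lra.
Qed.

Lemma up_flux_kap_loss t : 0 <= t <= d ->
  sqrt h * kap + 2 * wgt h t * kap * (1 - h * t / 2) - wgt h t * kap ^ 2 <= 3 * kap.
Proof.
  intros Ht. pose proof (wgt_bounds t Ht) as Hw.
  assert (He1 : sqrt h <= 1) by (rewrite <- sqrt_1; apply sqrt_le_1_alt; lra).
  assert (Hht : 0 <= h * t <= 1 / 3) by (pose proof (h_mul_delta_le h_le_1);
    split; [apply Rmult_le_pos|apply Rle_trans with (h * d); [apply Rmult_le_compat_l|]]; lra).
  assert (sqrt h * kap <= 1 * kap) by (apply Rmult_le_compat_r; lra).
  assert (wgt h t * (1 - h * t / 2) <= 1 * 1) by (apply Rmult_le_compat; lra).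
  assert (2 * kap * (wgt h t * (1 - h * t / 2)) <= 2 * kap * 1) by (apply Rmult_le_compat_l; lra).
  assert (0 <= wgt h t * kap ^ 2) by (apply Rmult_le_pos; [lra|apply pow2_ge_0]).
  replace (2 * wgt h t * kap * (1 - h * t / 2)) with (2 * kap * (wgt h t * (1 - h * t / 2))) by ring.
  lra.
Qed.

Lemma wgt_pot_upper_shifted A m sigma t : Rabs (IZR m) <= A -> 0 <= t <= d -> 0 < sigma ->
  sqrt h * d * (3 * (A + 2 * b) ^ 2 + 1) + 3 * kap / h <= sigma / 3 ->
  wgt h t * (pot b m h t - expansion h ((IZR m - b / 2) ^ 2 + sigma / 2))
    <= sqrt h * (1 - kap - h * t / 2) + wgt h t * h / 2 + wgt h t * (1 - kap - h * t / 2) ^ 2.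
Proof.
  intros Hm Ht Hs Hsmall.
  pose proof (wgt_pot_upper A m t Hm Ht) as HU. pose proof (wgt_bounds t Ht) as Hw.
  pose proof (sqrt_h_mul_delta_bounds t Ht) as Het. pose proof (up_flux_kap_loss t Ht) as Hkap.
  assert (He : 0 < sqrt h) by now apply sqrt_lt_R0.
  assert (Hhe : h = sqrt h * sqrt h) by (symmetry; apply sqrt_sqrt; lra).
  assert (Hw1 : wgt h t = 1 - sqrt h * t) by reflexivity.
  assert (HY2 : (IZR m - b / 2) ^ 2 <= (A + b / 2) ^ 2)
    by (rewrite <- pow2_abs; apply pow_incr; split; [apply Rabs_pos|now apply abs_m_minus_half_b]).
  assert (HA : 0 <= A) by (pose proof (Rabs_pos (IZR m)); lra).
  set (Y2 := (IZR m - b / 2) ^ 2) in *.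
  assert (Hid : sqrt h * (1 - kap - h * t / 2) + wgt h t * h / 2 + wgt h t * (1 - kap - h * t / 2) ^ 2
                - wgt h t * (pot b m h t - expansion h (Y2 + sigma / 2))
              = - (wgt h t * pot b m h t - h * Y2)
                - h * (Y2 * sqrt h * t - wgt h t * sigma / 2 - sqrt h * t ^ 2 - wgt h t * h * t ^ 2 / 4
                       + sqrt h * t / 2)
                - (sqrt h * kap + 2 * wgt h t * kap * (1 - h * t / 2) - wgt h t * kap ^ 2)).
  { unfold expansion. rewrite Hw1. set (e := sqrt h) in *. rewrite Hhe. field. }
  assert (HY20 : 0 <= Y2) by apply pow2_ge_0.
  set (P := pot b m h t) in *. set (w := wgt h t) in *. set (e := sqrt h) in *. set (ed := e * d) in *.
  clearbody Y2 P w e ed.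
  assert (H2 : Y2 * e * t - w * sigma / 2 - e * t ^ 2 - w * h * t ^ 2 / 4 + e * t / 2
               <= ed * (Y2 + 1 / 2) - sigma / 3).
  { assert (Y2 * (e * t) <= Y2 * ed) by (apply Rmult_le_compat_l; lra).
    assert (0 <= e * t ^ 2) by (apply Rmult_le_pos; [lra|apply pow2_ge_0]).
    assert (0 <= w * h * t ^ 2 / 4)
      by (pose proof (pow2_ge_0 t); apply Rmult_le_pos; [apply Rmult_le_pos; [apply Rmult_le_pos|]|]; lra).
    assert (2 / 3 * sigma <= w * sigma) by (apply Rmult_le_compat_r; lra).
    replace (Y2 * e * t) with (Y2 * (e * t)) by ring. lra. }
  assert (Hsum : h * (2 * (A + 2 * b) ^ 2 * ed + (ed * (Y2 + 1 / 2) - sigma / 3) + 3 * kap / h) <= 0).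
  { assert ((A + b / 2) ^ 2 <= (A + 2 * b) ^ 2) by (apply pow_incr; lra).
    assert (ed * (2 * (A + 2 * b) ^ 2) + ed * (Y2 + 1 / 2) <= ed * (3 * (A + 2 * b) ^ 2 + 1)) by nra.
    apply Rmult_le_0_l; lra. }
  replace (h * (2 * (A + 2 * b) ^ 2 * ed + (ed * (Y2 + 1 / 2) - sigma / 3) + 3 * kap / h))
    with (h * (2 * (A + 2 * b) ^ 2 * ed) + h * (ed * (Y2 + 1 / 2) - sigma / 3) + 3 * kap) in Hsum
    by (field; lra).
  assert (h * (Y2 * e * t - w * sigma / 2 - e * t ^ 2 - w * h * t ^ 2 / 4 + e * t / 2)
          <= h * (ed * (Y2 + 1 / 2) - sigma / 3)) by (apply Rmult_le_compat_l; lra).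
  lra.
Qed.

Lemma up_wronskian_integrand_pos A m sigma t : Rabs (IZR m) <= A -> 0 < sigma ->
  sqrt h * d * (3 * (A + 2 * b) ^ 2 + 1) + 3 * kap / h <= sigma / 3 ->
  ((A + b / 2) ^ 2 + sigma / 2) * sqrt h <= 1 -> 0 < t < d ->
  let lam := expansion h ((IZR m - b / 2) ^ 2 + sigma) in
  0 < shoot_V m lam t ->
  0 < shoot_V m lam t * up_flux_deriv kap t - up_psi kap t * shoot_flux_deriv m lam t.
Proof.
  intros Hm Hs Hsm1 Hsm2 Ht lam HVt. assert (Ht' : 0 <= t <= d) by lra.
  rewrite shoot_flux_deriv_on by auto.
  pose proof (wgt_bounds t Ht') as Hw.
  pose proof (wgt_pot_upper_shifted A m sigma t Hm Ht' Hs Hsm1) as Hup.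
  pose proof (wgt_pot_shifted_ge A m sigma t Hm Ht' Hs Hsm2) as Hge.
  pose proof (up_psi_pos t ltac:(lra)) as Hpt.
  assert (Hq : 0 < up_q kap * exp t) by (apply Rmult_lt_0_compat; apply exp_pos).
  assert (Hf : 0 < up_f kap t) by apply exp_pos.
  assert (Hlam : wgt h t * (pot b m h t - lam)
                 = wgt h t * (pot b m h t - expansion h ((IZR m - b / 2) ^ 2 + sigma / 2))
                   - wgt h t * (sigma / 2 * h)) by (unfold lam, expansion; field).
  rewrite Hlam.
  set (W := wgt h t * (pot b m h t - expansion h ((IZR m - b / 2) ^ 2 + sigma / 2))) in *.
  assert (HWpsi : W * up_psi kap t <= up_flux_deriv kap t).
  { unfold up_flux_deriv, up_psi.
    assert (W * up_f kap t <= (sqrt h * (1 - kap - h * t / 2) + wgt h t * h / 2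
                                + wgt h t * (1 - kap - h * t / 2) ^ 2) * up_f kap t)
      by (apply Rmult_le_compat_r; lra).
    assert ((wgt h t - sqrt h) * (up_q kap * exp t) <= W * (up_q kap * exp t))
      by (apply Rmult_le_compat_r; lra).
    lra. }
  assert (0 <= shoot_V m lam t * (up_flux_deriv kap t - W * up_psi kap t)) by (apply Rmult_le_pos; lra).
  assert (0 < shoot_V m lam t * up_psi kap t * (wgt h t * (sigma / 2 * h)))
    by (repeat apply Rmult_lt_0_compat; lra).
  nra.
Qed.

(* If [V] stayed positive on [[0, d]], its Wronskian with [up_psi] would have to increase but does not. *)
Lemma shoot_V_nonpos_above A m sigma : Rabs (IZR m) <= A -> 0 < sigma ->
  sqrt h * d * (3 * (A + 2 * b) ^ 2 + 1) + 3 * kap / h <= sigma / 3 ->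
  ((A + b / 2) ^ 2 + sigma / 2) * sqrt h <= 1 ->
  exists t, 0 <= t <= d /\ shoot_V m (expansion h ((IZR m - b / 2) ^ 2 + sigma)) t <= 0.
Proof.
  intros Hm Hs Hsm1 Hsm2.
  set (lam := expansion h ((IZR m - b / 2) ^ 2 + sigma)).
  apply NNPP. intros Hn.
  assert (HVp : forall t, 0 <= t <= d -> 0 < shoot_V m lam t).
  { intros t Ht. apply Rnot_le_lt. intros Hle. apply Hn. eauto. }
  destruct (shoot_solution m lam) as [HV [HP [HV0 HP0]]].
  assert (Hlt := wronskian_increasing (wgt h) (up_psi kap) (up_psi_deriv kap) (up_flux_deriv kap)
                   (shoot_V m lam) (fun t => coef_a t * shoot_P m lam t)
                   (fun t => wgt h t * (coef_a t * shoot_P m lam t)) (shoot_flux_deriv m lam) 0 d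
                   delta_pos (is_derive_up_psi kap) (is_derive_up_flux kap) HV (is_derive_shoot_flux m lam)
                   (fun t _ => eq_refl)
                   (fun t Ht => up_wronskian_integrand_pos A m sigma t Hm Hs Hsm1 Hsm2 Ht
                                  (HVp t ltac:(lra)))).
  rewrite up_psi_delta, HV0, HP0, coef_a_on, wgt_0 in Hlt by lra.
  pose proof up_q_le.
  assert (Hat0 : 0 <= 1 * (1 * up_psi_deriv kap 0) - up_psi kap 0 * (1 * (/ 1 * -1))).
  { unfold up_psi_deriv, up_psi, up_f. replace (- ((1 - kap) * 0 - h * 0 ^ 2 / 4)) with 0 by (simpl; field).
    rewrite exp_0. lra. }
  assert (0 < shoot_V m lam d * wgt h d)
    by (apply Rmult_lt_0_compat; [apply HVp; lra|pose proof (wgt_bounds d ltac:(lra)); lra]).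
  pose proof up_psi_deriv_delta_neg.
  nra.
Qed.

End UpperComparison.

Lemma eigenvalue_ge_expansion A m beta sigma mu :
  Rabs (IZR m) <= A -> 0 <= beta <= (IZR m - b / 2) ^ 2 -> 0 < sigma ->
  sqrt h * d ^ 2 + h * d ^ 2 / 4 + (2 * A + b) * b * (sqrt h * d) <= 2 / 3 * sigma ->
  is_eigenvalue b rho m h mu -> expansion h (beta - sigma) <= mu.
Proof.
  intros Hm Hbeta Hs Hsmall [u [du [g [Hdu [Hg [Heq [Hrobin [Hud Hnz]]]]]]]].
  apply (no_eigenfunction_below A m beta sigma mu d u du g); auto; [lra| |];
    intros t; apply is_derive_Reals; auto.
Qed.

Definition shoot_reaches_zero (m : Z) (lam : R) : Prop := exists t, 0 <= t <= d /\ shoot_V m lam t <= 0.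

Section InfimumOfShootingSet.

Variables (m : Z) (l : R).
Hypothesis l_lower : forall lam, shoot_reaches_zero m lam -> l <= lam.
Hypothesis l_approx : forall eps, 0 < eps -> exists lam, shoot_reaches_zero m lam /\ lam < l + eps.

Lemma shoot_reaches_zero_inf : shoot_reaches_zero m l.
Proof.
  apply NNPP. intros Hn.
  assert (Hpos : forall t, 0 <= t <= d -> 0 < shoot_V m l t).
  { intros t Ht. apply Rnot_le_lt. intros Hle. apply Hn. now exists t. }
  destruct (shoot_solution m l) as [HV _].
  destruct (continuity_ab_min (shoot_V m l) 0 d) as [tm [Hmin Htm]];
    [lra|intros t _; apply (continuity_pt_of_is_derive _ _ _ (HV t))|].
  assert (Hm0 : 0 < shoot_V m l tm) by auto.
  destruct (shoot_V_continuous_in_lam m l _ Hm0) as [r [Hr Hcont]].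
  destruct (l_approx r Hr) as [lam [[t [Ht HVt]] Hlam]].
  assert (Hl : l <= lam) by (apply l_lower; now exists t).
  specialize (Hcont lam ltac:(rewrite Rabs_right; lra) t Ht). apply Rabs_lt_between in Hcont.
  specialize (Hmin t Ht). lra.
Qed.

(* If the first zero [z] of [V] came before [d], then [V'(z) < 0] since [(V, P)] never
   vanishes simultaneously, so [V] would become negative and stay so for nearby smaller [lam]. *)
Lemma shoot_V_inf_delta : shoot_V m l d = 0.
Proof.
  destruct (shoot_solution m l) as [HV [_ [HV0 _]]].
  destruct shoot_reaches_zero_inf as [t1 [Ht1 HVt1]].
  destruct (first_zero (shoot_V m l) 0 t1) as [z [Hz1 [Hz2 Hz3]]];
    [lra|intros t _; apply (continuity_pt_of_is_derive _ _ _ (HV t))|lra|auto|].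
  destruct (Req_dec z d) as [<-|Hzd]; auto. exfalso.
  assert (Hw : 2 / 3 <= wgt h z <= 1) by (apply wgt_bounds; lra).
  assert (HPz : shoot_P m l z <> 0) by (intros HP0; apply (shoot_no_common_zero m l z); auto; lra).
  assert (Hdz : coef_a z * shoot_P m l z <= 0).
  { apply (derive_nonpos_of_pos_left (shoot_V m l) z _ z); auto; [lra|].
    intros s Hs. apply Hz3. lra. }
  rewrite coef_a_on in Hdz by lra.
  assert (Hneg : / wgt h z * shoot_P m l z < 0).
  { destruct Hdz as [|Heq]; auto. exfalso. apply HPz.
    apply Rmult_eq_reg_l with (/ wgt h z); [lra|apply Rinv_neq_0_compat; lra]. }
  rewrite <- coef_a_on in Hneg by lra.
  destruct (is_derive_neg_exists_right (shoot_V m l) z _ (d - z) (HV z) Hz2 Hneg) as [t' [Ht' HVt']]; [lra|].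
  destruct (shoot_V_continuous_in_lam m l (- shoot_V m l t')) as [r [Hr Hc]]; [lra|].
  assert (Hreach : shoot_reaches_zero m (l - r / 2)).
  { exists t'. split; [lra|].
    specialize (Hc (l - r / 2) ltac:(rewrite Rabs_left; lra) t' ltac:(lra)).
    apply Rabs_lt_between in Hc. lra. }
  specialize (l_lower _ Hreach). lra.
Qed.

Lemma shoot_inf_le_eigenvalue mu : is_eigenvalue b rho m h mu -> l <= mu.
Proof.
  intros [u [du [g [Hdu [Hg [Heq [Hrobin [Hud Hnz]]]]]]]].
  apply Rnot_lt_le. intros Hmu.
  set (lam := (mu + l) / 2).
  assert (Hpos : forall t, 0 <= t <= d -> 0 < shoot_V m lam t).
  { intros t Ht. apply Rnot_le_lt. intros Hle.
    assert (l <= lam) by (apply l_lower; now exists t). unfold lam in *. lra. }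
  destruct (shoot_solution m lam) as [HV [HP [HV0 HP0]]].
  refine (sturm_comparison (wgt h) (fun t => pot b m h t - mu) (shoot_V m lam)
            (fun t => coef_a t * shoot_P m lam t) (fun t => wgt h t * (coef_a t * shoot_P m lam t))
            (shoot_flux_deriv m lam) d _ (wgt_0 h) HV (is_derive_shoot_flux m lam) (fun t _ => eq_refl)
            Hpos _ _ u du g _ _ _ Hrobin Hud Hnz).
  - intros t Ht. pose proof (wgt_bounds t Ht). lra.
  - rewrite coef_a_on, HV0, HP0, wgt_0 by lra. lra.
  - intros t Ht. rewrite shoot_flux_deriv_on by auto.
    assert (0 < wgt h t * shoot_V m lam t)
      by (pose proof (wgt_bounds t Ht); apply Rmult_lt_0_compat; auto; lra).
    assert (mu < lam) by (unfold lam; lra).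
    replace (wgt h t * (pot b m h t - lam) * shoot_V m lam t)
      with (wgt h t * (pot b m h t - mu) * shoot_V m lam t - wgt h t * shoot_V m lam t * (lam - mu)) by ring.
    assert (0 < wgt h t * shoot_V m lam t * (lam - mu)) by (apply Rmult_lt_0_compat; lra). lra.
  - intros t. apply is_derive_Reals, Hdu.
  - intros t. apply is_derive_Reals, Hg.
  - intros t Ht. apply eigenfunction_flux_eq; auto.
Qed.

End InfimumOfShootingSet.

Theorem lowest_eigenvalue_exists A m beta sigma : Rabs (IZR m) <= A -> h <= 1 ->
  0 <= beta <= (IZR m - b / 2) ^ 2 -> 0 < sigma ->
  sqrt h * d ^ 2 + h * d ^ 2 / 4 + (2 * A + b) * b * (sqrt h * d) <= 2 / 3 * sigma ->
  2 * exp (- d) <= 1 / 2 ->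
  sqrt h * d * (3 * (A + 2 * b) ^ 2 + 1) + 3 * (2 * exp (- d)) / h <= sigma / 3 ->
  ((A + b / 2) ^ 2 + sigma / 2) * sqrt h <= 1 ->
  exists lam, is_lowest_eigenvalue b rho m h lam /\ lam <= expansion h ((IZR m - b / 2) ^ 2 + sigma).
Proof.
  intros Hm Hh1 Hbeta Hs Hlow Hk Hup Hg.
  assert (Hkap : 0 <= 2 * exp (- d) <= 1 / 2) by (pose proof (exp_pos (- d)); lra).
  assert (Hreach : shoot_reaches_zero m (expansion h ((IZR m - b / 2) ^ 2 + sigma)))
    by exact (shoot_V_nonpos_above _ Hh1 Hkap (Rle_refl _) A m sigma Hm Hs Hup Hg).
  destruct (inf_exists (shoot_reaches_zero m) (expansion h (beta - sigma))) as [l [Hl_lower Hl_approx]].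
  - eauto.
  - intros lam [t [Ht HVt]]. apply Rnot_lt_le. intros Hlt.
    pose proof (shoot_V_pos_below A m beta sigma lam Hm Hbeta Hs Hlow Hlt t Ht). lra.
  - exists l. split; [split|].
    + apply shoot_is_eigenvalue, (shoot_V_inf_delta m l Hl_lower Hl_approx).
    + apply (shoot_inf_le_eigenvalue m l Hl_lower).
    + now apply Hl_lower.
Qed.

End Shooting.

Lemma sqr_div_4_le_exp y : 0 <= y -> y ^ 2 / 4 <= exp y.
Proof.
  intros Hy. replace y with (y / 2 + y / 2) at 2 by field. rewrite exp_plus.
  pose proof (exp_ineq1_le (y / 2)).
  assert (y / 2 * (y / 2) <= exp (y / 2) * exp (y / 2)) by (apply Rmult_le_compat; lra).
  replace (y ^ 2 / 4) with (y / 2 * (y / 2)) by field. lra.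
Qed.

Lemma at_right_0_Rpower_lt c p eta : 0 < c -> 0 < p -> 0 < eta ->
  at_right 0 (fun h => c * Rpower h p < eta).
Proof.
  intros Hc Hp Heta.
  exists (mkposreal _ (exp_pos (/ p * ln (eta / c)))). intros h Hh Hh0.
  change (Rabs (h - 0) < Rpower (eta / c) (/ p)) in Hh. rewrite Rminus_0_r, Rabs_right in Hh by lra.
  assert (Rpower h p < eta / c).
  { replace (eta / c) with (Rpower (Rpower (eta / c) (/ p)) p)
      by (rewrite Rpower_mult, Rinv_l, Rpower_1; [|apply Rdiv_lt_0_compat|]; lra).
    apply Rlt_Rpower_l; lra. }
  apply Rmult_lt_reg_l with (/ c); [now apply Rinv_0_lt_compat|].
  rewrite <- Rmult_assoc, Rinv_l, Rmult_1_l by lra. unfold Rdiv in *. lra.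
Qed.

(* With [L = - ln h], [exp (- h^(-g)) = exp (- exp (g L))] beats [h = exp (- L)]
   because [exp (g L) >= (g L)^2 / 4]. *)
Lemma at_right_0_exp_neg_Rpower g eta : 0 < g -> 0 < eta ->
  at_right 0 (fun h => exp (- Rpower h (- g)) <= eta * h).
Proof.
  intros Hg Heta.
  assert (Hg8 : 0 < 8 / g ^ 2) by (apply Rdiv_lt_0_compat; [lra|apply pow_lt; lra]).
  pose proof (Rabs_pos (ln eta)).
  exists (mkposreal _ (exp_pos (- (8 / g ^ 2 + Rabs (ln eta))))). intros h Hh Hh0.
  change (Rabs (h - 0) < exp (- (8 / g ^ 2 + Rabs (ln eta)))) in Hh.
  rewrite Rminus_0_r, Rabs_right in Hh by lra.
  assert (HL : ln h < - (8 / g ^ 2 + Rabs (ln eta))) by (rewrite <- ln_exp; now apply ln_increasing).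
  remember (- ln h) as L eqn:HLdef.
  assert (Hpow : Rpower h (- g) = exp (g * L)) by (unfold Rpower; rewrite HLdef; f_equal; ring).
  assert (Hh_eq : h = exp (- L)) by (rewrite HLdef, Ropp_involutive, exp_ln; auto).
  assert (HgL : 8 <= g ^ 2 * L).
  { apply Rle_trans with (g ^ 2 * (8 / g ^ 2)); [right; field; lra|].
    apply Rmult_le_compat_l; [apply pow2_ge_0|lra]. }
  assert (Hlarge : L + Rabs (ln eta) <= exp (g * L)).
  { eapply Rle_trans; [|apply sqr_div_4_le_exp; apply Rmult_le_pos; lra].
    replace ((g * L) ^ 2 / 4) with (g ^ 2 * L * L / 4) by (simpl; field).
    assert (8 * L <= g ^ 2 * L * L) by (apply Rmult_le_compat_r; lra). lra. }
  rewrite Hpow, Hh_eq. rewrite <- (exp_ln eta) at 1 by auto. rewrite <- exp_plus.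
  apply exp_le_compat. pose proof (Rle_abs (- ln eta)). rewrite Rabs_Ropp in *. lra.
Qed.

Lemma delta_scaling rho h : 0 < h ->
  sqrt h = Rpower h (1 / 2) /\
  sqrt h * delta rho h = Rpower h rho /\
  sqrt h * delta rho h ^ 2 = Rpower h (2 * rho - 1 / 2) /\
  h * delta rho h ^ 2 = Rpower h (2 * rho).
Proof.
  intros Hh.
  assert (Hs : sqrt h = Rpower h (1 / 2)) by (rewrite <- Rpower_sqrt by auto; f_equal; field).
  unfold delta. rewrite Hs. simpl pow. rewrite !Rmult_1_r.
  split; [reflexivity|]. split; [|split].
  - rewrite <- Rpower_plus. f_equal. ring.
  - rewrite <- !Rpower_plus. f_equal. ring.
  - replace (h * (Rpower h (rho - 1 / 2) * Rpower h (rho - 1 / 2)))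
      with (Rpower h 1 * (Rpower h (rho - 1 / 2) * Rpower h (rho - 1 / 2))) by now rewrite Rpower_1.
    rewrite <- !Rpower_plus. f_equal. field.
Qed.

Lemma small_h_regime A b rho sigma : 0 < A -> 0 < b -> 1 / 4 < rho < 1 / 2 -> 0 < sigma ->
  at_right 0 (fun h =>
    0 < delta rho h /\ sqrt h * delta rho h <= 1 / 3 /\ h <= 1 /\
    sqrt h * delta rho h ^ 2 + h * delta rho h ^ 2 / 4 + (2 * A + b) * b * (sqrt h * delta rho h)
      <= 2 / 3 * sigma /\
    2 * exp (- delta rho h) <= 1 / 2 /\
    sqrt h * delta rho h * (3 * (A + 2 * b) ^ 2 + 1) + 3 * (2 * exp (- delta rho h)) / h <= sigma / 3 /\
    ((A + b / 2) ^ 2 + sigma / 2) * sqrt h <= 1).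
Proof.
  intros HA Hb Hrho Hs.
  assert (HKb : 0 < (2 * A + b) * b) by (apply Rmult_lt_0_compat; lra).
  assert (HC : 0 < 3 * (A + 2 * b) ^ 2 + 1) by (pose proof (pow2_ge_0 (A + 2 * b)); lra).
  assert (HK3 : 0 < (A + b / 2) ^ 2 + sigma / 2) by (pose proof (pow2_ge_0 (A + b / 2)); lra).
  assert (Hexp : forall e, 0 < e -> at_right 0 (fun h => exp (- delta rho h) <= e * h)).
  { intros e He. eapply filter_imp; [|apply (at_right_0_exp_neg_Rpower (1 / 2 - rho) e); lra].
    intros h Hh. unfold delta. now replace (rho - 1 / 2) with (- (1 / 2 - rho)) by ring. }
  eapply filter_imp; cycle 1.
  { apply filter_and; [exists (mkposreal 1 Rlt_0_1); intros h _ Hh; exact Hh|].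
    apply filter_and; [apply (at_right_0_Rpower_lt 1 1 1); lra|].
    apply filter_and; [apply (at_right_0_Rpower_lt 1 rho (1 / 3)); lra|].
    apply filter_and; [apply (at_right_0_Rpower_lt ((2 * A + b) * b) rho (sigma / 4)); lra|].
    apply filter_and; [apply (at_right_0_Rpower_lt (3 * (A + 2 * b) ^ 2 + 1) rho (sigma / 6)); lra|].
    apply filter_and; [apply (at_right_0_Rpower_lt 1 (2 * rho - 1 / 2) (sigma / 4)); lra|].
    apply filter_and; [apply (at_right_0_Rpower_lt 1 (2 * rho) (sigma / 4)); lra|].
    apply filter_and; [apply (at_right_0_Rpower_lt ((A + b / 2) ^ 2 + sigma / 2) (1 / 2) 1); lra|].
    apply filter_and; [apply (Hexp (1 / 4)); lra|].
    apply (Hexp (sigma / 36)); lra. }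
  intros h [Hh [Hh1 [Hr1 [Hr2 [Hr3 [Hq1 [Hq2 [Hsq [He1 He2]]]]]]]]].
  rewrite Rpower_1 in Hh1 by auto.
  destruct (delta_scaling rho h Hh) as [Es [Ed [Ed2 Ehd2]]].
  rewrite Ed2, Ehd2, Ed, Es.
  assert (0 < Rpower h rho) by apply exp_pos.
  assert (Hexp_pos : 0 < exp (- delta rho h)) by apply exp_pos.
  assert (3 * (2 * exp (- delta rho h)) / h <= sigma / 6).
  { apply Rmult_le_reg_r with h; [auto|]. unfold Rdiv. rewrite Rmult_assoc, Rinv_l by lra. lra. }
  repeat split; try apply exp_pos; lra.
Qed.

Theorem proposition2p7 (A b rho beta : R) :
  0 < A -> 0 < b -> 1/4 < rho < 1/2 -> is_beta_hat b A beta ->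
  forall eps : R, 0 < eps ->
  exists h0 : R, 0 < h0 /\
  forall h : R, 0 < h < h0 -> Rpower h (1/2 - rho) < 1/3 ->
    let target := -1 - sqrt h + (beta - 1/2) * h in
    (forall m : Z, Rabs (IZR m) <= A ->
       exists lam, is_lowest_eigenvalue b rho m h lam) /\
    (forall (m : Z) (lam : R), Rabs (IZR m) <= A ->
       is_lowest_eigenvalue b rho m h lam -> target - eps * h <= lam) /\
    (exists (m : Z) (lam : R), Rabs (IZR m) <= A /\
       is_lowest_eigenvalue b rho m h lam /\ lam <= target + eps * h).
Proof.
  intros HA Hb Hrho [[m0 [Hm0 Hbeta0]] Hbeta] eps Heps.
  destruct (small_h_regime A b rho eps HA Hb Hrho Heps) as [h0 Hh0].
  exists h0. split; [apply cond_pos|].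
  intros h [Hh Hhh0] _. cbv zeta.
  destruct (Hh0 h ltac:(change (Rabs (h - 0) < h0); rewrite Rminus_0_r, Rabs_right; lra) Hh)
    as [Hd [Hds [Hh1 [Hlow [Hk [Hup Hsq]]]]]].
  assert (Hbeta_m : forall m, Rabs (IZR m) <= A -> 0 <= beta <= (IZR m - b / 2) ^ 2)
    by (intros m Hm; split; [rewrite Hbeta0; apply pow2_ge_0|auto]).
  assert (Htarget : -1 - sqrt h + (beta - 1 / 2) * h - eps * h = expansion h (beta - eps))
    by (unfold expansion; ring).
  split; [|split].
  - intros m Hm.
    destruct (lowest_eigenvalue_exists b rho h Hh Hb Hd Hds A m beta eps Hm Hh1 (Hbeta_m m Hm) Heps
                Hlow Hk Hup Hsq) as [lam [Hl _]].
    eauto.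
  - intros m lam Hm [Hl _]. rewrite Htarget.
    exact (eigenvalue_ge_expansion b rho h Hh Hb Hd Hds A m beta eps lam Hm (Hbeta_m m Hm) Heps Hlow Hl).
  - destruct (lowest_eigenvalue_exists b rho h Hh Hb Hd Hds A m0 beta eps Hm0 Hh1 (Hbeta_m m0 Hm0) Heps
                Hlow Hk Hup Hsq) as [lam [Hl Hlam]].
    exists m0, lam. split; [auto|split; [exact Hl|]].
    rewrite <- Hbeta0 in Hlam. unfold expansion in Hlam. lra.
Qed.
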